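(* Let $\mathfrak{h}\ge2$ be such that level $\mathfrak{h}$ of the hierarchy is defined, i.e. $\nu_{\mathfrak{h}-1}\ge2$. Then $\Gamma^{\star,\mathfrak{h}}>\Gamma^{\star,\mathfrak{h}-1}$.
   Context: Setting. Let $\Omega$ be a finite set with a connected undirected graph structure; write $\eta\sim\xi$ if $\{\eta,\xi\}$ is an edge. Let $\mathbb{H}:\Omega\to\mathbb{R}$. Paths and heights. A path $\omega:\eta\to\xi$ is a sequence $(\omega_n)_{n=0}^N$ with $\omega_0=\eta$, $\omega_N=\xi$ and $\omega_n\sim\omega_{n+1}$ ($N=0$ allowed). Its height is $\Phi_\omega:=\max_n\mathbb{H}(\omega_n)$. Set $\Phi(\eta,\xi):=\min_{\omega:\eta\to\xi}\Phi_\omega$. For nonempty sets, $\Phi(\mathcal{A},\mathcal{B}):=\min_{\eta\in\mathcal{A},\xi\in\mathcal{B}}\Phi(\eta,\xi)$, and $\Phi(\mathcal{A},\eta):=\Phi(\mathcal{A},\{\eta\})$. Ground states. $\mathcal{S}:=\operatorname{argmin}_\Omega\mathbb{H}$, $\overline{\Phi}:=\max_{s,s'\in\mathcal{S}}\Phi(s,s')$, and $\overline{\Omega}:=\{\eta:\Phi(\mathcal{S},\eta)\le\overline{\Phi}\}$. Sets. For $\mathcal{A}\subseteq\Omega$: $\mathcal{F}(\mathcal{A}):=\operatorname{argmin}_{\mathcal{A}}\mathbb{H}$; $\partial\mathcal{A}:=\{\eta\notin\mathcal{A}:\eta\sim\xi\text{ for some }\xi\in\mathcal{A}\}$; $\partial^\star\mathcal{A}:=\mathcal{F}(\partial\mathcal{A})$.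 A set is connected if any two of its points are joined by a path inside it. Stable plateaux and cycles. A stable plateau is a nonempty connected set $\mathcal{P}$ with constant energy $\mathbb{H}(\mathcal{P})$ such that $\mathbb{H}>\mathbb{H}(\mathcal{P})$ on $\partial\mathcal{P}$. A cycle is a nonempty connected $\mathcal{C}$ with $\max_{\mathcal{C}}\mathbb{H}<\min_{\partial\mathcal{C}}\mathbb{H}$. Its depth is $\Gamma^{\mathcal{C}}:=\min_{\partial\mathcal{C}}\mathbb{H}-\min_{\mathcal{C}}\mathbb{H}$. General construction (C). Let $\mathscr{C}$ be a collection of pairwise disjoint cycles contained in $\overline{\Omega}$ with $|\mathscr{C}|\ge2$, and let $\Gamma^\star>0$. Put - $\mathscr{C}^\star:=\{\mathcal{C}\in\mathscr{C}:\Gamma^{\mathcal{C}}\ge\Gamma^\star\}$ and $\mathscr{C}^\sharp:=\{\mathcal{C}\in\mathscr{C}:\Gamma^{\mathcal{C}}<\Gamma^\star\}$; - $\mathscr{P}^{\mathscr{C}}:=\{\mathcal{F}(\mathcal{C}):\mathcal{C}\in\mathscr{C}\}$ and $\mathscr{P}^{\mathscr{C}^\star}:=\{\mathcal{F}(\mathcal{C}):\mathcal{C}\in\mathscr{C}^\star\}$; - $\Delta^{\mathscr{C}}:=\overline{\Omega}\setminus\bigcup_{\mathcal{C}\in\mathscr{C}}\mathcal{C}$. Let $\mathfrak{X}^{\mathscr{C}}$ be the continuous-time Markov chain on $\Omega^{\mathscr{C}}:=\Delta^{\mathscr{C}}\cup\mathscr{P}^{\mathscr{C}}$, in which each $\mathcal{F}(\mathcal{C})$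 is treated as a single point. Its rates are: - $\mathfrak{R}^{\mathscr{C}}(\eta,\xi)=1$ for $\eta,\xi\in\Delta^{\mathscr{C}}$ with $\eta\sim\xi$ and $\mathbb{H}(\xi)\le\mathbb{H}(\eta)$; - $\mathfrak{R}^{\mathscr{C}}(\eta,\mathcal{F}(\mathcal{C}))=|\{\zeta\in\mathcal{C}:\eta\sim\zeta\}|$ for $\eta\in\Delta^{\mathscr{C}}\cap\partial\mathcal{C}$; - $\mathfrak{R}^{\mathscr{C}}(\mathcal{F}(\mathcal{C}),\eta)=|\mathcal{F}(\mathcal{C})|^{-1}|\{\zeta\in\mathcal{C}:\eta\sim\zeta\}|$ if $\Gamma^{\mathcal{C}}\le\Gamma^\star$ and $\eta\in\partial^\star\mathcal{C}$; - all other rates are $0$. The trace chain $\mathfrak{X}^{\mathscr{C}^\star}$ on $\mathscr{P}^{\mathscr{C}^\star}$ has rates, for distinct $\mathcal{C},\mathcal{C}'\in\mathscr{C}^\star$, $$\mathfrak{R}^{\mathscr{C}^\star}(\mathcal{F}(\mathcal{C}),\mathcal{F}(\mathcal{C}')):=\sum_{\eta\in\Delta^{\mathscr{C}}}\mathfrak{R}^{\mathscr{C}}(\mathcal{F}(\mathcal{C}),\eta)\,\mathbf{P}^{\mathscr{C}}_\eta[\mathcal{T}_{\mathcal{F}(\mathcal{C}')}=\mathcal{T}_{\mathscr{P}^{\mathscr{C}^\star}}].$$ Here $\mathbf{P}^{\mathscr{C}}_\eta$ is the law of $\mathfrak{X}^{\mathscr{C}}$ started at $\eta$, and $\mathcal{T}_{\mathcal{A}}$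 is the hitting time of $\mathcal{A}$. Hierarchy. Let $\mathscr{P}^1=\{\mathcal{P}_1^1,\dots,\mathcal{P}^1_{\nu_0}\}$ be the collection of all stable plateaux contained in $\overline{\Omega}$, and assume $\nu_0\ge2$. Suppose that at some level $\mathfrak{h}\ge1$ the sets $\mathcal{P}^{\mathfrak{h}}_1,\dots,\mathcal{P}^{\mathfrak{h}}_{\nu_{\mathfrak{h}-1}}$ are defined, with $\nu_{\mathfrak{h}-1}\ge2$. Then define: - $\mathbb{H}(\mathcal{P}^{\mathfrak{h}}_i):=\min_{\mathcal{P}^{\mathfrak{h}}_i}\mathbb{H}$; - $\mathscr{P}^{\star,\mathfrak{h}}:=\{\mathcal{P}^{\mathfrak{h}}_i:i\in[1,\nu_{\mathfrak{h}-1}]\}$; - $\breve{\mathcal{P}}^{\mathfrak{h}}_i:=\bigcup_{j\ne i}\mathcal{P}^{\mathfrak{h}}_j$; - $\Gamma^{\mathfrak{h}}_i:=\Phi(\mathcal{P}^{\mathfrak{h}}_i,\breve{\mathcal{P}}^{\mathfrak{h}}_i)-\mathbb{H}(\mathcal{P}^{\mathfrak{h}}_i)$ and $\Gamma^{\star,\mathfrak{h}}:=\min_i\Gamma_i^{\mathfrak{h}}$; - $\mathcal{V}^{\mathfrak{h}}_i:=\{\eta\in\Omega:\Phi(\mathcal{P}^{\mathfrak{h}}_i,\eta)-\mathbb{H}(\mathcal{P}^{\mathfrak{h}}_i)<\Gamma^{\mathfrak{h}}_i\}$. Set $\mathscr{C}^1:=\{\mathcal{V}^1_i:i\in[1,\nu_0]\}$.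 For $\mathfrak{h}\ge2$, set $$\mathscr{C}^{\mathfrak{h}}:=\{\mathcal{V}^{\mathfrak{h}}_i:i\in[1,\nu_{\mathfrak{h}-1}]\}\cup\{\mathcal{C}\in\mathscr{C}^{\star,\mathfrak{h}-1}_{\rm tr}\cup\mathscr{C}^{\sharp,\mathfrak{h}-1}:\mathcal{C}\cap\mathcal{V}^{\mathfrak{h}}_i=\emptyset\ \forall i\}.$$ Apply (C) to $(\mathscr{C}^{\mathfrak{h}},\Gamma^{\star,\mathfrak{h}})$. Write $\mathscr{C}^{\star,\mathfrak{h}}:=(\mathscr{C}^{\mathfrak{h}})^\star$ and $\mathscr{C}^{\sharp,\mathfrak{h}}:=(\mathscr{C}^{\mathfrak{h}})^\sharp$. Let $\mathfrak{X}^{\star,\mathfrak{h}}$ be the trace chain of (C) on $\mathscr{P}^{(\mathscr{C}^{\mathfrak{h}})^\star}$. Decompose $\mathscr{P}^{(\mathscr{C}^{\mathfrak{h}})^\star}$ into the closed communicating classes $\mathscr{P}^{\star,\mathfrak{h}}_1,\dots,\mathscr{P}^{\star,\mathfrak{h}}_{\nu_{\mathfrak{h}}}$ of $\mathfrak{X}^{\star,\mathfrak{h}}$ and the set $\mathscr{P}^{\star,\mathfrak{h}}_{\rm tr}$ of transient elements. Let $\mathscr{C}^{\star,\mathfrak{h}}_m:=\{\mathcal{C}\in\mathscr{C}^{\star,\mathfrak{h}}:\mathcal{F}(\mathcal{C})\in\mathscr{P}^{\star,\mathfrak{h}}_m\}$ for $m\in\{1,\dots,\nu_{\mathfrak{h}},{\rm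 tr}\}$. If $\nu_{\mathfrak{h}}\ge2$, define $\mathcal{P}^{\mathfrak{h}+1}_i:=\bigcup_{\mathcal{P}\in\mathscr{P}^{\star,\mathfrak{h}}_i}\mathcal{P}$ for $i\in[1,\nu_{\mathfrak{h}}]$ and continue to level $\mathfrak{h}+1$. The terminal level $\mathfrak{m}$ is the first $\mathfrak{h}$ with $\nu_{\mathfrak{h}}=1$. Finally, $\mathscr{P}^{\star,\mathfrak{h}}_{\rm rec}:=\mathscr{P}^{\star,\mathfrak{h}}_1\cup\dots\cup\mathscr{P}^{\star,\mathfrak{h}}_{\nu_{\mathfrak{h}}}$. Here $[a,b]$ denotes the set of integers from $a$ to $b$. *)

From HB Require Import structures.
From mathcomp Require Import all_boot all_order all_algebra.
From mathcomp Require Import boolp reals topology normedtype sequences.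
Set Implicit Arguments. Unset Strict Implicit. Unset Printing Implicit Defensive.
Import Order.TTheory GRing.Theory Num.Theory numFieldNormedType.Exports.
Local Open Scope ring_scope.

Section Hierarchy.
Context (R : realType) (T : finType) (adj : rel T) (H : T -> R).

Definition minOver (S : finType) (P : pred S) (f : S -> R) : R :=
  match [pick s | P s] with
  | Some s0 => \big[Num.min/f s0]_(s | P s) f s
  | None => 0 end.
Definition maxOver (S : finType) (P : pred S) (f : S -> R) : R :=
  match [pick s | P s] with
  | Some s0 => \big[Num.max/f s0]_(s | P s) f s
  | None => 0 end.

Definition Hmin (A : {set T}) : R := minOver (mem A) H.
Definition Fmin (A : {set T}) : {set T} := [set x in A | H x == Hmin A].

Definition bdry (A : {set T}) : {set T} :=
  [set x | (x \notin A) && [exists y in A, adj x y]].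
Definition bdry_star (A : {set T}) : {set T} := Fmin (bdry A).

(* a path omega : x -> y is x :: p with [path adj x p] and [last x p = y] *)
Definition path_height (x : T) (p : seq T) : R :=
  \big[Num.max/H x]_(z <- x :: p) H z.
Definition is_path (x y : T) (p : seq T) : Prop := path adj x p /\ last x p = y.

(* Phi(x,y) = min over paths x -> y of their heights.  Every path height is a
   value H z, so the set of path heights is {H z | z in Zxy} below. *)
Definition path_heights_at (x y : T) : {set T} :=
  [set z | `[< exists p, is_path x y p /\ path_height x p = H z >] ].
Definition Phi (x y : T) : R := minOver (mem (path_heights_at x y)) H.

Definition PhiS (A B : {set T}) : R :=
  minOver (fun ab : T * T => (ab.1 \in A) && (ab.2 \in B)) (fun ab => Phi ab.1 ab.2).

Definition Sgr : {set T} := Fmin setT.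
Definition Phibar : R :=
  maxOver (fun ss : T * T => (ss.1 \in Sgr) && (ss.2 \in Sgr)) (fun ss => Phi ss.1 ss.2).
Definition Omegabar : {set T} := [set x | PhiS Sgr [set x] <= Phibar].

Definition set_connected (A : {set T}) : Prop :=
  forall x y, x \in A -> y \in A -> exists p, is_path x y p /\ all (mem A) p.
Definition stable_plateau (P : {set T}) : Prop :=
  [/\ P != set0, set_connected P,
      (forall x y, x \in P -> y \in P -> H x = H y) &
      (forall x y, x \in bdry P -> y \in P -> H y < H x)].

Definition depth (C : {set T}) : R := Hmin (bdry C) - Hmin C.

(* Input: Pfam = {P^h_i}, Cold = C^{*,h-1}_tr \cup C^{#,h-1} (empty at h = 1). *)
Section Level.
Variables (Pfam Cold : {set {set T}}).

Definition breve (P : {set T}) : {set T} := \bigcup_(Q in Pfam | Q != P) Q.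
Definition GammaP (P : {set T}) : R := PhiS P (breve P) - Hmin P.
Definition Gstar_lvl : R := minOver (mem Pfam) GammaP.
Definition Vset (P : {set T}) : {set T} :=
  [set x | PhiS P [set x] - Hmin P < GammaP P].

Definition Ccol : {set {set T}} :=
  [set Vset P | P in Pfam] :|:
  [set C in Cold | [forall P in Pfam, [disjoint C & Vset P]]].

Definition Cstar : {set {set T}} := [set C in Ccol | Gstar_lvl <= depth C].
Definition Csharp : {set {set T}} := [set C in Ccol | depth C < Gstar_lvl].
Definition Delta : {set T} := Omegabar :\: \bigcup_(C in Ccol) C.

(* States of the chain X^C: singletons [set x] (x in Delta) and F(C) (C in Ccol).
   The rate function is defined on all of {set T}; it vanishes off the states. *)
Definition rate (a b : {set T}) : R :=
  (\sum_(x in Delta) \sum_(y in Delta)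
     (if (a == [set x]) && (b == [set y]) && adj x y && (H y <= H x)
      then 1 else 0))
  + (\sum_(C in Ccol) \sum_(x in Delta)
       (if (a == [set x]) && (b == Fmin C) && (x \in bdry C)
        then #|[set z in C | adj x z]|%:R else 0))
  + (\sum_(C in Ccol) \sum_(x in Delta)
       (if (a == Fmin C) && (b == [set x]) && (depth C <= Gstar_lvl)
           && (x \in bdry_star C)
        then #|[set z in C | adj x z]|%:R / #|Fmin C|%:R else 0)).

Definition total_rate (a : {set T}) : R := \sum_(b : {set T}) rate a b.

(* hitn n a B x = P_x[ the chain hits B within n jumps, and first at a ]  (a in B) *)
Fixpoint hitn (n : nat) (a : {set T}) (B : {set {set T}}) (x : {set T}) : R :=
  match n with
  | 0 => if x == a then 1 else 0
  | n'.+1 =>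
      if x == a then 1 else if x \in B then 0
      else if total_rate x == 0 then 0
      else \sum_(y : {set T}) rate x y / total_rate x * hitn n' a B y
  end.
Definition hitprob (a : {set T}) (B : {set {set T}}) (x : {set T}) : R :=
  limn (fun n => hitn n a B x).

Definition Pstar : {set {set T}} := [set Fmin C | C in Cstar].

Definition trace_rate (a b : {set T}) : R :=
  \sum_(x in Delta) rate a [set x] * hitprob b Pstar [set x].

Definition trace_edge : rel {set T} :=
  fun a b => [&& a \in Pstar, b \in Pstar, a != b & 0 < trace_rate a b].
Definition reach (a b : {set T}) : bool := connect trace_edge a b.
Definition recurrent (a : {set T}) : bool :=
  (a \in Pstar) && [forall b, (b \in Pstar) ==> reach a b ==> reach b a].
Definition comm_class (a : {set T}) : {set {set T}} :=
  [set b in Pstar | reach a b && reach b a].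
Definition closed_classes : {set {set {set T}}} :=
  [set comm_class a | a in [set a in Pstar | recurrent a]].
Definition transient : {set {set T}} := [set a in Pstar | ~~ recurrent a].
Definition nu_lvl : nat := #|closed_classes|.

Definition next_Pfam : {set {set T}} :=
  [set \bigcup_(Q in K) Q | K : {set {set T}} in closed_classes].
Definition Cstar_tr : {set {set T}} := [set C in Cstar | Fmin C \in transient].
Definition next_Cold : {set {set T}} := Cstar_tr :|: Csharp.
End Level.

Definition Pfam1 : {set {set T}} :=
  [set P : {set T} | (P \subset Omegabar) && `[< stable_plateau P >] ].

(* level h data (Pfam^h, C^{*,h-1}_tr \cup C^{#,h-1}); meaningful for h >= 1 *)
Fixpoint level (h : nat) : {set {set T}} * {set {set T}} :=
  match h with
  | 0 | 1 => (Pfam1, set0)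
  | h'.+1 => let L := level h' in (next_Pfam L.1 L.2, next_Cold L.1 L.2)
  end.

Definition Gamma_star (h : nat) : R := Gstar_lvl (level h).1.
Definition nu (h : nat) : nat :=
  if h is 0 then #|Pfam1| else nu_lvl (level h).1 (level h).2.

Definition level_defined (h : nat) : Prop := forall k, (k < h)%N -> (2 <= nu k)%N.

End Hierarchy.

From Pilot Require Import Defs.
From HB Require Import structures.
From mathcomp Require Import all_boot all_order all_algebra.
From mathcomp Require Import boolp reals topology normedtype sequences.
Import Order.TTheory GRing.Theory Num.Theory numFieldNormedType.Exports.
Local Open Scope ring_scope.
Set Implicit Arguments. Unset Strict Implicit. Unset Printing Implicit Defensive.

(* The hierarchy carries an invariant from level to level: the plateaux lie in [Omegabar],
   are at least two, and communicate internally below their exit heights; the cycles of the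
   collection are disjoint; every stable plateau meets one of them; and there is no shallow
   trap, i.e. no sealed basin whose cycles are all shallower than [Gamma_star].  Without
   traps the reduced chain reaches a deep cycle from every state.  Starting from a closed
   class of the trace chain it therefore cannot climb above [Hmin + Gamma_star] of the class
   without falling back into it, so leaving the union of the class for another one costs
   strictly more than [Gamma_star]; minimising over the classes gives the increase. *)

Section MinOver.
Variables (R : realType) (S : finType) (P : pred S) (f : S -> R).

Lemma minOver_le s : P s -> minOver P f <= f s.
Proof.
move=> Ps; rewrite /minOver; case: pickP => [s0 _|/(_ s)]; last by rewrite Ps.
by rewrite (bigD1 s) //= ge_min lexx.
Qed.

Lemma minOver_attained : (exists s, P s) -> exists2 s, P s & minOver P f = f s.
Proof.
move=> [s Ps]; rewrite /minOver; case: pickP => [s0 Ps0|/(_ s)]; last by rewrite Ps.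
apply: (big_ind (fun v => exists2 s, P s & v = f s)); [by exists s0| |by move=> i Pi; exists i].
move=> _ _ [a Pa ->] [b Pb ->].
by have [ab|/ltW ba] := leP (f a) (f b); [exists a; rewrite ?min_l|exists b; rewrite ?min_r].
Qed.

Lemma lt_minOver t : (exists s, P s) -> (forall s, P s -> t < f s) -> t < minOver P f.
Proof. by move=> /minOver_attained [s Ps ->] /(_ s Ps). Qed.

Lemma le_maxOver s : P s -> f s <= maxOver P f.
Proof.
move=> Ps; rewrite /maxOver; case: pickP => [s0 _|/(_ s)]; last by rewrite Ps.
by rewrite (bigD1 s) //= le_max lexx.
Qed.

End MinOver.

Section PositiveSums.
Variable R : numDomainType.

Lemma paddr_gt0 (x y : R) : 0 <= x -> 0 <= y -> (0 < x + y) = (0 < x) || (0 < y).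
Proof.
by move=> x_ge0 y_ge0; rewrite !lt_def paddr_eq0 // addr_ge0 // x_ge0 y_ge0 negb_and !andbT.
Qed.

Lemma psumr_gt0P (I : finType) (P : pred I) (F : I -> R) :
  (forall i, P i -> 0 <= F i) -> reflect (exists2 i, P i & 0 < F i) (0 < \sum_(i | P i) F i).
Proof.
move=> F_ge0; rewrite lt_def sumr_ge0 // andbT psumr_neq0 //.
by apply: (iffP hasP) => [[i _ /andP[]]|[i Pi Fi]]; exists i; rewrite ?mem_index_enum ?Pi.
Qed.

Lemma psumr2_gt0P (I J : finType) (P : pred I) (Q : pred J) (F : I -> J -> R) :
  (forall i j, 0 <= F i j) ->
  reflect (exists i j, [/\ P i, Q j & 0 < F i j]) (0 < \sum_(i | P i) \sum_(j | Q j) F i j).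
Proof.
move=> F_ge0; have inner_ge0 i : 0 <= \sum_(j | Q j) F i j by apply: sumr_ge0.
apply: (iffP (psumr_gt0P (fun i _ => inner_ge0 i))) => [[i Pi]|[i [j [Pi Qj Fij]]]].
  by case/psumr_gt0P => // j Qj Fij; exists i, j.
by exists i => //; apply/psumr_gt0P => //; exists j.
Qed.

Lemma if_gt0 (c : bool) (v : R) : 0 < (if c then v else 0) -> c.
Proof. by case: c; rewrite ?ltxx. Qed.

End PositiveSums.

Section CommunicationHeight.
Variables (R : realType) (T : finType) (adj : rel T) (H : T -> R).
Hypothesis adj_sym : symmetric adj.
Hypothesis adj_connected : forall x y : T, connect adj x y.

Local Notation Phi := (Phi adj H).
Local Notation bdry := (bdry adj).

Lemma le_path_height x p z : z \in x :: p -> H z <= path_height H x p.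
Proof.
rewrite /path_height; elim: (x :: p) z => // a l IH z; rewrite inE big_cons le_max.
by case/orP=> [/eqP->|/IH ->]; rewrite ?lexx ?orbT.
Qed.

Lemma path_height_attained x p : exists2 z, z \in x :: p & path_height H x p = H z.
Proof.
rewrite /path_height big_seq.
apply: (big_ind (fun v => exists2 z, z \in x :: p & v = H z)).
- by exists x; rewrite ?mem_head.
- move=> _ _ [a ap ->] [b bp ->].
  by have [/ltW ab|ba] := ltP (H a) (H b); [exists b; rewrite ?max_r|exists a; rewrite ?max_l].
- by move=> i ip; exists i.
Qed.

Definition path_below (t : R) (x y : T) (p : seq T) :=
  [/\ path adj x p, last x p = y & forall z, z \in x :: p -> H z <= t].

Lemma Phi_le_path_below t x y p : path_below t x y p -> Phi x y <= t.
Proof.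
case=> pp ly hp; have [z zp hpz] := path_height_attained x p.
have zin : z \in path_heights_at adj H x y.
  by rewrite inE; apply/asboolP; exists p; split => //; split.
exact: le_trans (minOver_le H zin) (hp z zp).
Qed.

Lemma Phi_optimal_path x y : exists p, path_below (Phi x y) x y p.
Proof.
have [p pp lp] := connectP (adj_connected x y).
have : exists z, z \in path_heights_at adj H x y.
  have [z zp hpz] := path_height_attained x p.
  by exists z; rewrite inE; apply/asboolP; exists p; split => //; split.
case/(minOver_attained H) => z; rewrite inE => /asboolP [q [[qp ql] hq]] hz.
by exists q; split => // w wq; rewrite /Phi hz -hq; apply: le_path_height.
Qed.

Lemma Phi_leP t x y : reflect (exists p, path_below t x y p) (Phi x y <= t).
Proof.
apply: (iffP idP) => [le|[p]]; last exact: Phi_le_path_below.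
have [p [pp lp hp]] := Phi_optimal_path x y.
by exists p; split => // z /hp hz; apply: le_trans hz le.
Qed.

Lemma H_le_Phi_l x y : H x <= Phi x y.
Proof. by have [p [_ _ hp]] := Phi_optimal_path x y; apply: hp; rewrite mem_head. Qed.

Lemma H_le_Phi_r x y : H y <= Phi x y.
Proof. by have [p [_ <- hp]] := Phi_optimal_path x y; apply: hp; rewrite mem_last. Qed.

Lemma Phi_id x : Phi x x = H x.
Proof.
apply/eqP; rewrite eq_le H_le_Phi_l andbT.
by apply: (@Phi_le_path_below _ _ _ [::]); split => // z; rewrite inE => /eqP->.
Qed.

Lemma Phi_adj x y : adj x y -> Phi x y <= Num.max (H x) (H y).
Proof.
move=> xy; apply: (@Phi_le_path_below _ _ _ [:: y]); split => /=; rewrite ?xy //.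
by move=> z; rewrite !inE le_max => /orP[|] /eqP->; rewrite lexx ?orbT.
Qed.

Lemma Phi_ultra x y z : Phi x z <= Num.max (Phi x y) (Phi y z).
Proof.
have [p [pp lp hp]] := Phi_optimal_path x y.
have [q [qp lq hq]] := Phi_optimal_path y z.
apply: (@Phi_le_path_below _ _ _ (p ++ q)); split.
- by rewrite cat_path pp lp qp.
- by rewrite last_cat lp.
- move=> w; rewrite -cat_cons mem_cat le_max => /orP[/hp -> //|wq].
  by rewrite hq ?orbT // inE wq orbT.
Qed.

Lemma Phi_le_trans x y z t : Phi x y <= t -> Phi y z <= t -> Phi x z <= t.
Proof. by move=> h1 h2; apply: le_trans (Phi_ultra x y z) _; rewrite ge_max h1. Qed.

Lemma Phi_lt_trans x y z t : Phi x y < t -> Phi y z < t -> Phi x z < t.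
Proof. by move=> h1 h2; apply: le_lt_trans (Phi_ultra x y z) _; rewrite gt_max h1. Qed.

Lemma Phi_sym x y : Phi x y = Phi y x.
Proof.
suff le xy yx : Phi yx xy <= Phi xy yx by apply/eqP; rewrite eq_le !le.
have [p [pp <- hp]] := Phi_optimal_path xy yx.
have rev_cycle : last xy p :: rev (belast xy p) = rcons (rev p) xy.
  by rewrite -rev_rcons -lastI rev_cons.
apply/Phi_leP; exists (rev (belast xy p)); split.
- by rewrite rev_path (eq_path (e' := adj)) // => a b; rewrite adj_sym.
- by rewrite -(last_cons xy) rev_cycle last_rcons.
- by move=> z; rewrite rev_cycle -rev_cons mem_rev; apply: hp.
Qed.

Local Notation Hmin := (Hmin H).
Local Notation Fmin := (Fmin H).

Lemma Hmin_le (A : {set T}) z : z \in A -> Hmin A <= H z.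
Proof. exact: minOver_le. Qed.

Lemma Hmin_attained (A : {set T}) z0 : z0 \in A -> exists2 z, z \in A & Hmin A = H z.
Proof. by move=> zA; apply: minOver_attained; exists z0. Qed.

Lemma FminP (A : {set T}) z : reflect (z \in A /\ H z = Hmin A) (z \in Fmin A).
Proof. by rewrite inE; apply: (iffP andP) => -[-> /eqP]. Qed.

Lemma Fmin_sub (A : {set T}) z : z \in Fmin A -> z \in A.
Proof. by case/FminP. Qed.

Lemma Fmin_nonempty (A : {set T}) z0 : z0 \in A -> exists z, z \in Fmin A.
Proof. by move=> /Hmin_attained [z zA hz]; exists z; apply/FminP. Qed.

Lemma bdryP (A : {set T}) w :
  reflect (w \notin A /\ exists2 y, y \in A & adj w y) (w \in bdry A).
Proof.
rewrite inE; apply: (iffP andP) => -[wA h]; split => //.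
  by case/existsP: h => y /andP[yA wy]; exists y.
by case: h => y yA wy; apply/existsP; exists y; rewrite yA.
Qed.

Lemma bdry_adj (A : {set T}) u w : u \in A -> w \notin A -> adj u w -> w \in bdry A.
Proof. by move=> uA wA uw; apply/bdryP; split => //; exists u; rewrite // adj_sym. Qed.

Lemma path_crosses_bdry (A : {set T}) x p : path adj x p -> x \in A -> last x p \notin A ->
  exists2 w, w \in p & w \in bdry A.
Proof.
elim: p x => [|a l IH] x /=; first by move=> _ ->.
case/andP=> xa pa xA la; case aA: (a \in A).
  by have [w wl wb] := IH a pa aA la; exists w => //; rewrite inE wl orbT.
by exists a; rewrite ?mem_head // (bdry_adj xA) ?aA.
Qed.

Lemma bdry_le_Phi (A : {set T}) x y : x \in A -> y \notin A ->
  exists2 w, w \in bdry A & H w <= Phi x y.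
Proof.
move=> xA yA; have [p [pp lp hp]] := Phi_optimal_path x y.
have [w wp wb] : exists2 w, w \in p & w \in bdry A by apply: (path_crosses_bdry pp xA); rewrite lp.
by exists w => //; apply: hp; rewrite inE wp orbT.
Qed.

Lemma Phi_closed (A : pred T) t x y : Phi x y <= t -> x \in A ->
  (forall u w, u \in A -> adj u w -> H w <= t -> w \in A) -> y \in A.
Proof.
case/Phi_leP => p [pp <- hp] xA clA.
elim: p x pp hp xA => [|a l IH] x //= /andP[xa pa] hp xA.
apply: IH => [//|z zl|]; first by apply: hp; rewrite inE zl orbT.
by apply: (clA x) => //; apply: hp; rewrite !inE eqxx orbT.
Qed.

Local Notation PhiS := (PhiS adj H).

Lemma PhiS_le (A B : {set T}) a b : a \in A -> b \in B -> PhiS A B <= Phi a b.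
Proof. by move=> aA bB; apply: (minOver_le _ (s := (a, b))); rewrite /= aA. Qed.

Lemma PhiS_attained (A B : {set T}) a0 b0 : a0 \in A -> b0 \in B ->
  exists a b, [/\ a \in A, b \in B & PhiS A B = Phi a b].
Proof.
move=> a0A b0B.
have [[a b] /andP[/= aA bB] ->] : exists2 ab : T * T,
    (ab.1 \in A) && (ab.2 \in B) & PhiS A B = Phi ab.1 ab.2.
  by apply: minOver_attained; exists (a0, b0); rewrite /= a0A.
by exists a, b.
Qed.

Lemma PhiS1_le (A : {set T}) a x : a \in A -> PhiS A [set x] <= Phi a x.
Proof. by move=> aA; apply: PhiS_le; rewrite ?set11. Qed.

Lemma PhiS1_attained (A : {set T}) a0 x : a0 \in A ->
  exists2 a, a \in A & PhiS A [set x] = Phi a x.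
Proof.
move=> a0A; have [a [b [aA]]] := PhiS_attained a0A (set11 x).
by rewrite inE => /eqP-> ->; exists a.
Qed.

Local Notation Omega := (Omegabar adj H).
Local Notation Phibar := (Phibar adj H).
Local Notation Sgr := (Sgr H).

Lemma Sgr_nonempty (x0 : T) : exists s, s \in Sgr.
Proof. by have [s sS] := Fmin_nonempty (in_setT x0); exists s. Qed.

Lemma OmegabarP x : reflect (exists2 s, s \in Sgr & Phi s x <= Phibar) (x \in Omega).
Proof.
rewrite inE; apply: (iffP idP) => [|[s sS]]; last exact/le_trans/PhiS1_le.
by have [s0 s0S] := Sgr_nonempty x; have [s sS ->] := PhiS1_attained x s0S; exists s.
Qed.

Lemma H_le_Phibar x : x \in Omega -> H x <= Phibar.
Proof. by case/OmegabarP=> s _; apply/le_trans/H_le_Phi_r. Qed.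

Lemma Phi_le_Phibar x y : x \in Omega -> y \in Omega -> Phi x y <= Phibar.
Proof.
case/OmegabarP=> s sS sx; case/OmegabarP=> s' s'S s'y.
have ss' : Phi s s' <= Phibar by apply: (le_maxOver _ (s := (s, s'))); rewrite /= sS.
by apply: (Phi_le_trans (y := s)); [rewrite Phi_sym|apply: Phi_le_trans ss' s'y].
Qed.

Lemma Omegabar_Phi_closed x y : x \in Omega -> Phi x y <= Phibar -> y \in Omega.
Proof. by case/OmegabarP=> s sS sx xy; apply/OmegabarP; exists s; rewrite ?(Phi_le_trans sx). Qed.

Lemma Omegabar_adj x y : x \in Omega -> adj x y -> H y <= Phibar -> y \in Omega.
Proof.
move=> xO xy hy; apply: (Omegabar_Phi_closed xO); apply: le_trans (Phi_adj xy) _.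
by rewrite ge_max hy H_le_Phibar.
Qed.

Lemma stable_plateau_eq (P Q : {set T}) z :
  stable_plateau adj H P -> stable_plateau adj H Q -> z \in P -> z \in Q -> P = Q.
Proof.
suff sub P' Q' : stable_plateau adj H P' -> stable_plateau adj H Q' ->
    z \in P' -> z \in Q' -> Q' \subset P'.
  by move=> sP sQ zP zQ; apply/eqP; rewrite eqEsubset !sub.
move=> [_ _ _ bP] [_ cQ HQ _] zP zQ; apply/subsetP => q qQ; apply/negPn/negP => qP.
have [p [[pp lp] /allP pQ]] := cQ z q zQ qQ.
have [w wp wb] : exists2 w, w \in p & w \in bdry P'.
  by apply: (path_crosses_bdry pp zP); rewrite lp.
by have := bP w z wb zP; rewrite (HQ w z (pQ w wp) zQ) ltxx.
Qed.

Lemma basin_contains_stable_plateau (U : {set T}) (L : R) z1 : z1 \in U ->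
  (forall z, z \in U -> H z <= L) -> (forall w, w \in bdry U -> L < H w) ->
  exists2 P : {set T}, P \subset U & stable_plateau adj H P.
Proof.
move=> z1U UL bdryL; have [z0 z0F] := Fmin_nonempty z1U.
pose e := [rel a b | [&& adj a b, a \in Fmin U & b \in Fmin U]].
have e_sym : symmetric e by move=> a b /=; rewrite adj_sym; congr (_ && _); exact: andbC.
pose P := [set v | connect e z0 v].
have PF v : v \in P -> v \in Fmin U.
  rewrite inE => /connectP [p + ->]; move: z0F.
  by elim: p (z0) => //= a l IH x _ /andP[/and3P[_ _ /IH]].
exists P; first by apply/subsetP => v /PF /Fmin_sub.
split.
- by apply/set0Pn; exists z0; rewrite inE connect0.
- move=> x y; rewrite !inE => z0x z0y.
  have /connectP [p pp ly] : connect e x y.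
    by apply: connect_trans z0y; rewrite (sym_connect_sym e_sym).
  exists p; split; first by split => //; apply: sub_path pp => a b /andP[].
  apply/allP => v vp; have Pv : connect e z0 v -> v \in P by rewrite inE.
  apply: Pv; apply: connect_trans z0x _.
  by apply: (path_connect pp); rewrite inE vp orbT.
- by move=> x y /PF /FminP [_ ->] /PF /FminP [_ ->].
move=> x y /bdryP [xP [v vP xv]] /PF /FminP [_ ->].
have /FminP [vU Hv] := PF v vP.
case xU: (x \in U); last first.
  rewrite -Hv; apply: le_lt_trans (UL v vU) (bdryL x _).
  by apply/bdryP; rewrite xU; split => //; exists v.
rewrite lt_neqAle Hmin_le // andbT; apply: contraNneq xP => Hx.
have ev : e v x by rewrite /= adj_sym xv PF //; apply/FminP.
by move: vP; rewrite !inE => /connect_trans; apply; apply: connect1.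
Qed.

Record wf_cycle (C : {set T}) : Prop := WfCycle {
  cycle_nonempty : exists z, z \in C;
  cycle_sub_Omegabar : forall z, z \in C -> z \in Omega;
  cycle_lt_bdry : forall u w, u \in C -> w \in bdry C -> H u < H w;
  cycle_Phi_lt_exit : forall z z', z \in C -> z' \in C -> Phi z z' < Hmin (bdry C);
  cycle_bdry_nonempty : exists w, w \in bdry C;
  cycle_exit_le_Phibar : Hmin (bdry C) <= Phibar }.

Record wf_collection (Cs : {set {set T}}) : Prop := WfCollection {
  collection_wf_cycle : forall C, C \in Cs -> wf_cycle C;
  collection_disjoint : forall C C' z, C \in Cs -> C' \in Cs -> z \in C -> z \in C' -> C = C' }.

Record wf_plateaux (Pf : {set {set T}}) : Prop := WfPlateaux {
  plateau_nonempty : forall P, P \in Pf -> exists z, z \in P;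
  plateau_sub_Omegabar : forall P z, P \in Pf -> z \in P -> z \in Omega;
  plateaux_card_gt1 : (1 < #|Pf|)%N;
  plateau_Phi_lt_exit : forall P p p', P \in Pf -> p \in P -> p' \in P ->
    Phi p p' < PhiS P (breve Pf P) }.

Lemma breveP (Pf : {set {set T}}) P y :
  reflect (exists2 Q, (Q \in Pf) && (Q != P) & y \in Q) (y \in breve Pf P).
Proof. exact: bigcupP. Qed.

Lemma breve_nonempty (Pf : {set {set T}}) P : (1 < #|Pf|)%N ->
  (forall Q, Q \in Pf -> exists z, z \in Q) -> exists y, y \in breve Pf P.
Proof.
move=> /card_gt1P [Q1 [Q2 [Q1P Q2P ne]]] Pf_ne.
have [Q /andP[QP QnP]] : exists Q, (Q \in Pf) && (Q != P).
  by case: (eqVneq Q1 P) => [e|]; [exists Q2; rewrite Q2P -e eq_sym|exists Q1; rewrite Q1P].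
by have [y yQ] := Pf_ne Q QP; exists y; apply/breveP; exists Q; rewrite ?QP.
Qed.

Section Vsets.
Variable Pf : {set {set T}}.
Hypothesis Pf_wf : wf_plateaux Pf.

Local Notation exitP P := (PhiS P (breve Pf P)).
Local Notation V := (Vset adj H Pf).

Let Pf_ne := plateau_nonempty Pf_wf.

Lemma VsetP P x : (x \in V P) = (PhiS P [set x] < exitP P).
Proof. by rewrite inE /GammaP ltrD2r. Qed.

Lemma exitP_attained P : P \in Pf ->
  exists p q, [/\ p \in P, q \in breve Pf P & exitP P = Phi p q].
Proof.
move=> PP; have [p0 p0P] := Pf_ne PP.
have [q0 q0b] := breve_nonempty P (plateaux_card_gt1 Pf_wf) Pf_ne.
exact: PhiS_attained p0P q0b.
Qed.

Lemma exitP_le_Phibar P : P \in Pf -> exitP P <= Phibar.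
Proof.
move=> PP; have [p [q [pP /breveP [Q /andP[QP _] qQ] ->]]] := exitP_attained PP.
have P_Omega := plateau_sub_Omegabar Pf_wf.
by apply: Phi_le_Phibar; [apply: P_Omega PP pP|apply: P_Omega QP qQ].
Qed.

Lemma plateau_sub_Vset P p : P \in Pf -> p \in P -> p \in V P.
Proof.
move=> PP pP; rewrite VsetP; apply: le_lt_trans (PhiS1_le p pP) _.
exact: plateau_Phi_lt_exit.
Qed.

Lemma VsetP_witness P x : P \in Pf -> x \in V P -> exists2 p, p \in P & Phi p x < exitP P.
Proof.
move=> PP; rewrite VsetP; have [p0 p0P] := Pf_ne PP.
by have [p pP ->] := PhiS1_attained x p0P; exists p.
Qed.

Lemma Vset_sub_Omegabar P x : P \in Pf -> x \in V P -> x \in Omega.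
Proof.
move=> PP /(VsetP_witness PP) [p pP /ltW px].
apply: (Omegabar_Phi_closed (plateau_sub_Omegabar Pf_wf PP pP)).
exact: le_trans px (exitP_le_Phibar PP).
Qed.

Lemma Vset_lt_exit P u : P \in Pf -> u \in V P -> H u < exitP P.
Proof. by move=> PP /(VsetP_witness PP) [p pP]; apply/le_lt_trans/H_le_Phi_r. Qed.

Lemma Vset_adj_closed P u w : P \in Pf -> u \in V P -> adj u w -> H w < exitP P ->
  w \in V P.
Proof.
move=> PP uV uw hw; have [p pP pu] := VsetP_witness PP uV; rewrite VsetP.
apply: le_lt_trans (PhiS1_le w pP) _; apply: Phi_lt_trans pu _.
by apply: le_lt_trans (Phi_adj uw) _; rewrite gt_max hw Vset_lt_exit.
Qed.

Lemma exitP_le_Vset_bdry P w : P \in Pf -> w \in bdry (V P) -> exitP P <= H w.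
Proof.
move=> PP /bdryP [wV [u uV wu]]; rewrite leNgt; apply: contra wV.
by apply: Vset_adj_closed PP uV _; rewrite adj_sym.
Qed.

Lemma Vset_bdry_attains_exit P : P \in Pf -> exists2 w, w \in bdry (V P) & H w <= exitP P.
Proof.
move=> PP; have [p [q [pP qb ->]]] := exitP_attained PP.
apply: bdry_le_Phi; first exact: plateau_sub_Vset pP.
by rewrite VsetP -leNgt; have [p' p'P ->] := PhiS1_attained q pP; apply: PhiS_le.
Qed.

Lemma Hmin_bdry_Vset P : P \in Pf -> Hmin (bdry (V P)) = exitP P.
Proof.
move=> PP; have [w wb hw] := Vset_bdry_attains_exit PP.
apply/eqP; rewrite eq_le (le_trans (Hmin_le wb) hw) /=.
by have [w' w'b ->] := Hmin_attained wb; apply: exitP_le_Vset_bdry.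
Qed.

Lemma Vset_Phi_lt_exit P z z' : P \in Pf -> z \in V P -> z' \in V P -> Phi z z' < exitP P.
Proof.
move=> PP zV z'V; have [p pP pz] := VsetP_witness PP zV.
have [p' p'P p'z'] := VsetP_witness PP z'V.
apply: (@Phi_lt_trans _ p); first by rewrite Phi_sym.
exact: Phi_lt_trans (plateau_Phi_lt_exit Pf_wf PP pP p'P) p'z'.
Qed.

(* Two V-sets sharing a point would join their plateaux below one of the exit heights. *)
Lemma Vset_disjoint P Q z : P \in Pf -> Q \in Pf -> z \in V P -> z \in V Q -> P = Q.
Proof.
move=> PP QP zP zQ; apply/eqP/negPn/negP => ne.
have [p pP pz] := VsetP_witness PP zP; have [q qQ qz] := VsetP_witness QP zQ.
have exitP_pq : exitP P <= Phi p q.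
  by apply: PhiS_le => //; apply/breveP; exists Q; rewrite ?QP 1?eq_sym.
have exitQ_qp : exitP Q <= Phi q p.
  by apply: PhiS_le => //; apply/breveP; exists P; rewrite ?PP.
have := Phi_ultra p z q; rewrite (Phi_sym z q) le_max.
case/orP=> [/(le_trans exitP_pq)|]; first by rewrite leNgt pz.
by rewrite -Phi_sym => /(le_trans exitQ_qp); rewrite leNgt qz.
Qed.

Lemma Gstar_le_depth_Vset P : P \in Pf -> Gstar_lvl adj H Pf <= depth adj H (V P).
Proof.
move=> PP; apply: le_trans (minOver_le _ PP) _.
have [p0 p0P] := Pf_ne PP; have [p pP e] := Hmin_attained p0P.
rewrite /GammaP /depth Hmin_bdry_Vset // e lerD2l lerN2.
exact: Hmin_le (plateau_sub_Vset PP pP).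
Qed.

Lemma Vset_wf_cycle P : P \in Pf -> wf_cycle (V P).
Proof.
move=> PP; split.
- by have [p pP] := Pf_ne PP; exists p; apply: plateau_sub_Vset pP.
- by move=> z; apply: Vset_sub_Omegabar.
- by move=> u w uV wb; apply: lt_le_trans (Vset_lt_exit PP uV) (exitP_le_Vset_bdry PP wb).
- by move=> z z' zV z'V; rewrite Hmin_bdry_Vset //; apply: Vset_Phi_lt_exit.
- by have [w wb _] := Vset_bdry_attains_exit PP; exists w.
- by rewrite Hmin_bdry_Vset // exitP_le_Phibar.
Qed.

Lemma CcolP (Co : {set {set T}}) C : reflect ((exists2 P, P \in Pf & C = V P) \/
    (C \in Co /\ forall P, P \in Pf -> [disjoint C & V P])) (C \in Ccol adj H Pf Co).
Proof.
rewrite in_setU; apply: (iffP orP) => -[].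
- by case/imsetP => P PP ->; left; exists P.
- by rewrite inE => /andP[CC /forall_inP h]; right; split.
- by case=> P PP ->; left; apply: imset_f.
- by case=> CC h; right; rewrite inE CC; apply/forall_inP.
Qed.

Lemma Ccol_wf_collection (Co : {set {set T}}) :
  wf_collection Co -> wf_collection (Ccol adj H Pf Co).
Proof.
case=> Co_wf Co_disj; split.
  by move=> C /CcolP [[P PP ->]|[CC _]]; [apply: Vset_wf_cycle|apply: Co_wf].
move=> C C' z /CcolP [[P PP ->]|[CC hC]] /CcolP [[Q QP ->]|[C'C hC']] zC zC'.
- by rewrite (Vset_disjoint PP QP zC zC').
- by move: (disjointFr (hC' P PP) zC'); rewrite zC.
- by move: (disjointFr (hC Q QP) zC); rewrite zC'.
- exact: Co_disj zC zC'.
Qed.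

End Vsets.

(* The reduced chain started in a shallow trap never reaches a deep cycle. *)
Definition shallow_trap (Pf Co : {set {set T}}) (U : {set T}) (L : R) : Prop :=
  [/\ exists z, z \in U, {subset U <= Omega}, (forall z, z \in U -> H z <= L),
      (forall w, w \in bdry U -> L < H w) &
      forall C, C \in Ccol adj H Pf Co -> (exists2 z, z \in C & z \in U) ->
        [/\ C \subset U, depth adj H C < Gstar_lvl adj H Pf & Hmin (bdry C) <= L]].

Definition plateaux_hit (Pf Co : {set {set T}}) : Prop :=
  forall P : {set T}, P \subset Omega -> stable_plateau adj H P ->
    exists2 C, C \in Ccol adj H Pf Co & exists2 z, z \in P & z \in C.

Record level_inv (Pf Co : {set {set T}}) : Prop := LevelInv {
  inv_plateaux : wf_plateaux Pf;
  inv_cycles : wf_collection (Ccol adj H Pf Co);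
  inv_hit : plateaux_hit Pf Co;
  inv_no_trap : forall U L, ~ shallow_trap Pf Co U L }.

Section Level.
Variables (Pf Co : {set {set T}}).

Local Notation Ccol := (Ccol adj H Pf Co).
Local Notation Cstar := (Cstar adj H Pf Co).
Local Notation Delta := (Delta adj H Pf Co).
Local Notation rate := (rate adj H Pf Co).
Local Notation total_rate := (total_rate adj H Pf Co).
Local Notation hitn := (hitn adj H Pf Co).
Local Notation hitprob := (hitprob adj H Pf Co).
Local Notation Pstar := (Pstar adj H Pf Co).
Local Notation trace_rate := (trace_rate adj H Pf Co).
Local Notation trace_edge := (trace_edge adj H Pf Co).
Local Notation reach := (reach adj H Pf Co).
Local Notation recurrent := (recurrent adj H Pf Co).
Local Notation comm_class := (comm_class adj H Pf Co).
Local Notation closed_classes := (closed_classes adj H Pf Co).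
Local Notation Gam := (Gstar_lvl adj H Pf).
Local Notation depth := (depth adj H).
Local Notation bdry_star := (bdry_star adj H).

Hypothesis Ccol_wf : wf_collection Ccol.

Local Notation wfC := (collection_wf_cycle Ccol_wf).
Local Notation Ccol_disj := (collection_disjoint Ccol_wf).

Lemma DeltaP x : reflect (x \in Omega /\ forall C, C \in Ccol -> x \notin C) (x \in Delta).
Proof.
rewrite in_setD andbC; apply: (iffP andP) => -[xO h]; split => //.
  by move=> C CC; apply: contra h => xC; apply/bigcupP; exists C.
by apply/bigcupP => -[C CC]; apply/negP/h.
Qed.

Lemma Delta_notin C x : C \in Ccol -> x \in Delta -> x \notin C.
Proof. by move=> CC /DeltaP [_]; apply. Qed.

Lemma notin_Delta w : w \in Omega -> w \notin Delta -> exists2 C, C \in Ccol & w \in C.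
Proof.
move=> wO wD; apply/exists_inP; apply: contraR wD => /exists_inPn wC.
by apply/DeltaP; split.
Qed.

Lemma CstarP C : (C \in Cstar) = (C \in Ccol) && (Gam <= depth C).
Proof. by rewrite inE. Qed.

Lemma Cstar_Ccol C : C \in Cstar -> C \in Ccol.
Proof. by rewrite CstarP => /andP[]. Qed.

Lemma PstarP b : reflect (exists2 C, C \in Cstar & b = Fmin C) (b \in Pstar).
Proof. exact: (iffP imsetP). Qed.

Lemma Fmin_inj C C' : C \in Ccol -> C' \in Ccol -> Fmin C = Fmin C' -> C = C'.
Proof.
move=> CC C'C e; have [z0 z0C] := cycle_nonempty (wfC CC); have [z zF] := Fmin_nonempty z0C.
by apply: (Ccol_disj (z := z)) => //; apply: Fmin_sub; rewrite -?e.
Qed.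

Lemma Fmin_neq_set1 C x : C \in Ccol -> x \in Delta -> Fmin C <> [set x].
Proof.
move=> CC xD e; have := set11 x; rewrite -e => /Fmin_sub.
exact/negP/Delta_notin.
Qed.

Lemma set1_notin_Pstar x : x \in Delta -> [set x] \notin Pstar.
Proof.
by move=> xD; apply/negP => /PstarP [C /Cstar_Ccol CC e]; apply: Fmin_neq_set1 CC xD (esym e).
Qed.

Lemma Hmin_bdry_gt C z : C \in Ccol -> z \in C -> H z < Hmin (bdry C).
Proof.
move=> CC zC; have [w wb] := cycle_bdry_nonempty (wfC CC).
have [w' w'b ->] := Hmin_attained wb; exact: (cycle_lt_bdry (wfC CC) zC w'b).
Qed.

(* A second cycle containing [w] would lie both strictly above and strictly below [C]. *)
Lemma bdry_star_Delta C w : C \in Ccol -> w \in bdry_star C -> w \in Delta.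
Proof.
move=> CC /[dup] ws /FminP [/bdryP [wC [u uC wu]] Hw]; apply/DeltaP; split.
  have uO := cycle_sub_Omegabar (wfC CC) uC.
  by apply: (Omegabar_adj uO); rewrite 1?adj_sym // Hw (cycle_exit_le_Phibar (wfC CC)).
move=> C' C'C; apply/negP => wC'.
have uC' : u \notin C' by apply: contra wC => uC'; rewrite (Ccol_disj CC C'C uC uC').
have := cycle_lt_bdry (wfC CC) uC (bdry_adj uC wC _).
have := cycle_lt_bdry (wfC C'C) wC' (bdry_adj wC' uC' wu).
by rewrite adj_sym => /lt_trans h /(_ wu) /h; rewrite ltxx.
Qed.

Definition jump : rel {set T} := fun s s' => 0 < rate s s'.

Variant jump_spec (s s' : {set T}) : Prop :=
  | JumpDown x y of x \in Delta & y \in Delta & s = [set x] & s' = [set y]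
      & adj x y & H y <= H x
  | JumpIn C x of C \in Ccol & x \in Delta & s = [set x] & s' = Fmin C & x \in bdry C
  | JumpOut C x of C \in Ccol & x \in Delta & s = Fmin C & s' = [set x]
      & depth C <= Gam & x \in bdry_star C.

Lemma card_adj_gt0 C x : x \in bdry C -> 0 < #|[set z in C | adj x z]|%:R :> R.
Proof.
case/bdryP => _ [y yC xy]; rewrite ltr0n card_gt0; apply/set0Pn; exists y.
by rewrite inE yC xy.
Qed.

Lemma jumpP s s' : jump s s' <-> jump_spec s s'.
Proof.
have if_ge0 (c : bool) (v : R) : 0 <= v -> 0 <= (if c then v else 0) by case: c.
have sum_ge0 (I J : finType) (P : pred I) (Q : pred J) (F : I -> J -> R) :
    (forall i j, 0 <= F i j) -> 0 <= \sum_(i | P i) \sum_(j | Q j) F i j.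
  by move=> F_ge0; apply: sumr_ge0 => i _; apply: sumr_ge0.
rewrite /jump /rate !paddr_gt0 -?orbA; try by [apply: sum_ge0 => *; rewrite if_ge0 ?divr_ge0
  | apply: addr_ge0; apply: sum_ge0 => *; rewrite if_ge0].
split.
  case/or3P; case/psumr2_gt0P => [*|]; rewrite ?if_ge0 ?divr_ge0 //.
  - move=> x [y [xD yD /if_gt0 /andP[/andP[/andP[/eqP-> /eqP->] xy] yx]]].
    by apply: (JumpDown xD yD).
  - move=> C [x [CC xD /if_gt0 /andP[/andP[/eqP-> /eqP->] xb]]].
    by apply: (JumpIn CC xD).
  - move=> C [x [CC xD /if_gt0 /andP[/andP[/andP[/eqP-> /eqP->] hd] xs]]].
    by apply: (JumpOut CC xD).
case=> [x y xD yD -> -> xy yx|C x CC xD -> -> xb|C x CC xD -> -> hd xs]; apply/or3P.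
- constructor 1; apply/psumr2_gt0P => [*|]; rewrite ?if_ge0 //.
  by exists x, y; rewrite !eqxx xy yx.
- constructor 2; apply/psumr2_gt0P => [*|]; rewrite ?if_ge0 //.
  by exists C, x; rewrite !eqxx xb card_adj_gt0.
- constructor 3; apply/psumr2_gt0P => [*|]; rewrite ?if_ge0 ?divr_ge0 //.
  have [z0 z0C] := cycle_nonempty (wfC CC); have [z zF] := Fmin_nonempty z0C.
  have F_gt0 : 0 < #|Fmin C|%:R :> R by rewrite ltr0n card_gt0; apply/set0Pn; exists z.
  have xb : x \in bdry C by case/FminP: xs.
  by exists C, x; rewrite !eqxx hd xs divr_gt0 // card_adj_gt0.
Qed.

Lemma rate_ge0 s s' : 0 <= rate s s'.
Proof.
by rewrite !addr_ge0 //; apply: sumr_ge0 => C _; apply: sumr_ge0 => x _; case: ifP;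
  rewrite ?divr_ge0.
Qed.

Lemma total_rate_ge0 s : 0 <= total_rate s.
Proof. by apply: sumr_ge0 => s' _; apply: rate_ge0. Qed.

Lemma jump_total_rate_gt0 s s' : jump s s' -> 0 < total_rate s.
Proof.
move=> ss'; apply: lt_le_trans ss' _; rewrite [total_rate s](bigD1 s') //= lerDl.
by apply: sumr_ge0 => s'' _; apply: rate_ge0.
Qed.

Lemma jump_prob_ge0 s s' : 0 <= rate s s' / total_rate s.
Proof. by rewrite divr_ge0 ?rate_ge0 ?total_rate_ge0. Qed.

Section Hitting.
Variables (a : {set T}) (B : {set {set T}}).

Lemma hitn_ge0 n s : 0 <= hitn n a B s.
Proof.
elim: n s => [|n IH] s /=; first by case: ifP.
by do 3 case: ifP => // _; apply: sumr_ge0 => s' _; rewrite mulr_ge0 ?jump_prob_ge0.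
Qed.

Lemma hitn_le1 n s : hitn n a B s <= 1.
Proof.
elim: n s => [|n IH] s /=; first by case: ifP.
do 2 case: ifP => // _; case: ifP => // /negbT t0.
apply: (@le_trans _ _ (\sum_(s' : {set T}) rate s s' / total_rate s)).
  by apply: ler_sum => s' _; rewrite ler_piMr ?jump_prob_ge0.
by rewrite -mulr_suml divff.
Qed.

Lemma hitn_nondecreasing n s : hitn n a B s <= hitn n.+1 a B s.
Proof.
elim: n s => [|n IH] s.
  by rewrite [hitn 0 _ _ _]/=; case: eqVneq => [->|_]; rewrite ?hitn_ge0 //= eqxx.
rewrite [hitn n.+1 _ _ _]/= [hitn n.+2 _ _ _]/=; do 3 case: ifP => // _.
by apply: ler_sum => s' _; rewrite ler_wpM2l ?jump_prob_ge0.
Qed.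

Lemma hitn_le_hitprob n s : hitn n a B s <= hitprob a B s.
Proof.
have hitn_homo : nondecreasing_seq (fun n => hitn n a B s).
  by apply: homo_leq => // [????|i]; [apply: le_trans|apply: hitn_nondecreasing].
apply: nondecreasing_cvgn_le => //; apply: nondecreasing_is_cvgn => //.
by exists 1 => _ [m _ <-]; apply: hitn_le1.
Qed.

Lemma hitprob_ge0 s : 0 <= hitprob a B s.
Proof. exact: le_trans (hitn_ge0 0 s) (hitn_le_hitprob 0 s). Qed.

Lemma hitprob_gt0 s : 0 < hitprob a B s -> exists n, 0 < hitn n a B s.
Proof.
move=> h; apply/not_existsP => hn; move: h.
have -> : hitprob a B s = 0.
  rewrite /hitprob (_ : (fun n => _) = fun=> 0) ?lim_cst //; apply: funext => n.
  by apply/eqP; rewrite eq_le hitn_ge0 andbT leNgt; apply/negP => ?; apply: (hn n).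
by rewrite ltxx.
Qed.

Lemma hitn_gt0_connect n s : 0 < hitn n a B s -> connect jump s a.
Proof.
elim: n s => [|n IH] s /=.
  by case: ifP => [/eqP-> _|_]; [apply: connect0|rewrite ltxx].
case: ifP => [/eqP-> _|_]; first exact: connect0.
case: ifP => [_|_]; first by rewrite ltxx.
case: ifP => [_|_]; first by rewrite ltxx.
case/psumr_gt0P => [s' _|s' _]; first by rewrite mulr_ge0 ?jump_prob_ge0 ?hitn_ge0.
have [|] := boolP (jump s s'); last first.
  by rewrite /jump lt_def rate_ge0 andbT negbK => /eqP->; rewrite !mul0r ltxx.
move=> ss'; rewrite pmulr_rgt0 ?divr_gt0 ?(jump_total_rate_gt0 ss') // => /IH.
exact: connect_trans (connect1 ss').
Qed.

End Hitting.

Lemma jump_from_Pstar s s' : s \in Pstar -> jump s s' -> exists2 x, x \in Delta & s' = [set x].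
Proof.
case/PstarP => C /Cstar_Ccol CC -> /jumpP [x y xD _ e|C' x _ xD e|C' x _ xD _ ->]; last by exists x.
- by case: (Fmin_neq_set1 CC xD e).
- by case: (Fmin_neq_set1 CC xD e).
Qed.

Lemma hitn_at_target n b B : hitn n b B b = 1.
Proof. by case: n => [|n] /=; rewrite eqxx. Qed.

Lemma trace_rate_gt0 a b x : x \in Delta -> jump a [set x] -> 0 < hitprob b Pstar [set x] ->
  0 < trace_rate a b.
Proof.
move=> xD ax hx; apply/psumr_gt0P; last by exists x => //; apply: mulr_gt0.
by move=> y _; rewrite mulr_ge0 ?rate_ge0 ?hitprob_ge0.
Qed.

(* Along a jump path ending in [b], the first visit to [Pstar] happens at some [b'],
   which has positive hitting probability and still leads to [b] in the trace chain. *)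
Lemma jump_path_reach b p s : b \in Pstar -> path jump s p -> last s p = b ->
  (s \in Pstar -> reach s b) /\
  (s \notin Pstar -> exists b', [/\ b' \in Pstar, 0 < hitn (size p) b' Pstar s & reach b' b]).
Proof.
move=> bP; elim: p s => [|s1 p IH] s /=.
  by move=> _ ->; split => [_|]; [apply: connect0|rewrite bP].
case/andP=> ss1 ps1 /(IH s1 ps1) [IH1 IH2].
have hit_step b' k : b' \in Pstar -> s \notin Pstar -> 0 < hitn k b' Pstar s1 ->
    0 < hitn k.+1 b' Pstar s.
  move=> b'P sP hk /=; rewrite ifN ?(negbTE sP) ?gt_eqF ?(jump_total_rate_gt0 ss1) //; last first.
    by apply: contraNneq sP => ->.
  apply/psumr_gt0P => [s' _|]; first by rewrite mulr_ge0 ?jump_prob_ge0 ?hitn_ge0.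
  by exists s1 => //; rewrite mulr_gt0 ?divr_gt0 ?(jump_total_rate_gt0 ss1).
split=> [sP|sP].
  have [x xD e] := jump_from_Pstar sP ss1.
  have s1P : s1 \notin Pstar by rewrite e set1_notin_Pstar.
  have [b' [b'P hb' rb']] := IH2 s1P.
  have tr : 0 < trace_rate s b'.
    by rewrite (trace_rate_gt0 xD) -?e // (lt_le_trans hb') ?hitn_le_hitprob.
  case: (eqVneq s b') => [->//|ne]; apply: connect_trans rb'; apply: connect1.
  by rewrite /trace_edge sP b'P ne.
case: (boolP (s1 \in Pstar)) => s1P.
  by exists s1; rewrite s1P IH1 // hit_step // hitn_at_target.
have [b' [b'P hb' rb']] := IH2 s1P.
by exists b'; rewrite b'P rb' hit_step.
Qed.

Lemma reachE a b : a \in Pstar -> b \in Pstar -> reach a b = connect jump a b.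
Proof.
move=> aP bP; apply/idP/idP => [/connectP [p pp ->]|/connectP [p pp lp]]; last first.
  by have [+ _] := jump_path_reach bP pp (esym lp); apply.
elim: p a pp {aP} => [|c p IH] a /=; first by move=> _; apply: connect0.
case/andP=> /and4P [_ cP _ /psumr_gt0P tr] /IH; apply: connect_trans.
have [y _|x xD] := tr; first by rewrite mulr_ge0 ?rate_ge0 ?hitprob_ge0.
have := rate_ge0 a [set x]; rewrite le0r => /predU1P [->|ax]; first by rewrite mul0r ltxx.
rewrite pmulr_rgt0 // => /hitprob_gt0 [n /hitn_gt0_connect].
exact: connect_trans (connect1 ax).
Qed.

Lemma reach_refl a : reach a a.
Proof. exact: connect0. Qed.

Lemma recurrent_Pstar r : recurrent r -> r \in Pstar.
Proof. by case/andP. Qed.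

Lemma recurrent_reach_back r b : recurrent r -> b \in Pstar -> reach r b -> reach b r.
Proof. by case/andP=> _ /forallP /(_ b) /implyP h /h /implyP. Qed.

Lemma comm_classP r b : (b \in comm_class r) = [&& b \in Pstar, reach r b & reach b r].
Proof. by rewrite inE. Qed.

Lemma closed_classesP K :
  reflect (exists2 r, recurrent r & K = comm_class r) (K \in closed_classes).
Proof.
apply: (iffP imsetP) => -[r]; first by rewrite inE => /andP[_ rr] ->; exists r.
by move=> rr ->; exists r; rewrite // inE rr recurrent_Pstar.
Qed.

Lemma comm_class_self r : recurrent r -> r \in comm_class r.
Proof. by move=> rr; rewrite comm_classP recurrent_Pstar //= reach_refl. Qed.

Lemma comm_class_closed r b c : recurrent r -> b \in comm_class r -> c \in Pstar ->
  reach b c -> c \in comm_class r.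
Proof.
move=> rr; rewrite !comm_classP => /and3P [_ rb _] cP bc.
have rc : reach r c := connect_trans rb bc.
by rewrite cP rc recurrent_reach_back.
Qed.

Lemma comm_class_eq r r' b : recurrent r -> recurrent r' ->
  b \in comm_class r -> b \in comm_class r' -> comm_class r = comm_class r'.
Proof.
suff sub r1 r2 : recurrent r1 -> recurrent r2 -> b \in comm_class r1 -> b \in comm_class r2 ->
    {subset comm_class r1 <= comm_class r2}.
  by move=> rr rr' bK bK'; apply/setP => c; apply/idP/idP; apply: sub.
move=> _ rr2 bK1 bK2 c; rewrite [c \in _]comm_classP => /and3P [cP r1c _].
apply: (comm_class_closed rr2 bK2 cP).
by move: bK1; rewrite comm_classP => /and3P [_ _ br1]; apply: connect_trans br1 r1c.
Qed.

(* A state reaching the fewest states among those reachable from [a] is recurrent. *)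
Lemma exists_recurrent_reach a : a \in Pstar -> exists2 r, recurrent r & reach a r.
Proof.
move=> aP; pose nreach b := #|[set c | reach b c]|.
have aa : (a \in Pstar) && reach a a by rewrite aP reach_refl.
case: (@arg_minnP _ a (fun b => (b \in Pstar) && reach a b) nreach aa) => r /andP[rP ar] rmin.
exists r => //.
rewrite /recurrent rP; apply/forall_inP => c cP; apply/implyP => rc.
have sub : [set d | reach c d] \subset [set d | reach r d].
  by apply/subsetP => d; rewrite !inE; apply: connect_trans rc.
have ge : (nreach r <= nreach c)%N by apply: rmin; rewrite cP; apply: connect_trans ar rc.
have [_] := subset_leqif_card sub; rewrite eqn_leq subset_leq_card // ge => /esym /subsetP.
by move/(_ r); rewrite !inE reach_refl; apply.
Qed.

Definition state_cycle (s : {set T}) : option {set T} := [pick C in Ccol | Fmin C == s].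

Definition state_level (s : {set T}) : R :=
  if state_cycle s is Some C then Hmin (bdry C)
  else if [pick x | s == [set x]] is Some x then H x else 0.
Definition in_region (s : {set T}) (z : T) : bool :=
  if state_cycle s is Some C then z \in C else s == [set z].
Definition is_state (s : {set T}) : Prop :=
  (exists2 x, x \in Delta & s = [set x]) \/ (exists2 C, C \in Ccol & s = Fmin C).

Lemma state_cycle_Fmin C : C \in Ccol -> state_cycle (Fmin C) = Some C.
Proof.
move=> CC; rewrite /state_cycle; case: pickP => [C' /andP[C'C /eqP e]|/(_ C)].
  by rewrite (Fmin_inj C'C CC e).
by rewrite CC eqxx.
Qed.

Lemma state_cycle_set1 x : x \in Delta -> state_cycle [set x] = None.
Proof.
move=> xD; rewrite /state_cycle; case: pickP => [C /andP[CC /eqP e]|//].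
by case: (Fmin_neq_set1 CC xD e).
Qed.

Lemma state_level_Fmin C : C \in Ccol -> state_level (Fmin C) = Hmin (bdry C).
Proof. by move=> CC; rewrite /state_level state_cycle_Fmin. Qed.

Lemma state_level_set1 x : x \in Delta -> state_level [set x] = H x.
Proof.
move=> xD; rewrite /state_level state_cycle_set1 //.
by case: pickP => [y /eqP /set1_inj -> //|/(_ x)]; rewrite eqxx.
Qed.

Lemma in_region_Fmin C z : C \in Ccol -> in_region (Fmin C) z = (z \in C).
Proof. by move=> CC; rewrite /in_region state_cycle_Fmin. Qed.

Lemma in_region_set1 x z : x \in Delta -> in_region [set x] z = (z == x).
Proof. by move=> xD; rewrite /in_region state_cycle_set1 // eq_sym (inj_eq set1_inj). Qed.

Lemma in_regionP s z : is_state s -> in_region s z ->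
  (s = [set z] /\ z \in Delta) \/ (exists C, [/\ C \in Ccol, s = Fmin C & z \in C]).
Proof.
case=> [[x xD ->]|[C CC ->]]; first by rewrite in_region_set1 // => /eqP->; left.
by rewrite in_region_Fmin // => zC; right; exists C.
Qed.

Lemma region_nonempty s : is_state s -> exists z, in_region s z.
Proof.
case=> [[x xD ->]|[C CC ->]]; first by exists x; rewrite in_region_set1.
by have [z zC] := cycle_nonempty (wfC CC); exists z; rewrite in_region_Fmin.
Qed.

Lemma region_sub_Omegabar s z : is_state s -> in_region s z -> z \in Omega.
Proof.
case=> [[x xD ->]|[C CC ->]]; first by rewrite in_region_set1 // => /eqP-> ; case/DeltaP: xD.
by rewrite in_region_Fmin // => zC; apply: (cycle_sub_Omegabar (wfC CC)).
Qed.

Lemma region_le_level s z : is_state s -> in_region s z -> H z <= state_level s.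
Proof.
case=> [[x xD ->]|[C CC ->]]; first by rewrite in_region_set1 // state_level_set1 // => /eqP->.
by rewrite in_region_Fmin // state_level_Fmin // => /(Hmin_bdry_gt CC) /ltW.
Qed.

Lemma region_Phi_le_level s z z' : is_state s -> in_region s z -> in_region s z' ->
  Phi z z' <= state_level s.
Proof.
case=> [[x xD ->]|[C CC ->]].
  by rewrite !in_region_set1 // state_level_set1 // => /eqP-> /eqP->; rewrite Phi_id.
rewrite !in_region_Fmin // state_level_Fmin // => zC z'C.
exact/ltW/(cycle_Phi_lt_exit (wfC CC)).
Qed.

Lemma jump_is_state s s' : jump s s' -> is_state s /\ is_state s'.
Proof.
case/jumpP => [x y xD yD -> ->|C x CC xD -> ->|C x CC xD -> ->] *.
- by split; left; [exists x|exists y].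
- by split; [left; exists x|right; exists C].
- by split; [right; exists C|left; exists x].
Qed.

Lemma jump_level_le s s' : jump s s' -> state_level s' <= state_level s.
Proof.
case/jumpP => [x y xD yD -> -> _ yx|C x CC xD -> -> xb|C x CC xD -> -> _ /FminP [_ Hx]].
- by rewrite !state_level_set1.
- by rewrite state_level_Fmin // state_level_set1 // Hmin_le.
- by rewrite state_level_Fmin // state_level_set1 // Hx.
Qed.

Lemma jump_Phi_le_level s s' z z' : jump s s' -> in_region s z -> in_region s' z' ->
  Phi z z' <= state_level s.
Proof.
case/jumpP => [x y xD yD -> -> xy yx|C x CC xD -> -> xb|C x CC xD -> -> _ xs].
- rewrite !in_region_set1 // state_level_set1 // => /eqP-> /eqP->.
  by apply: le_trans (Phi_adj xy) _; rewrite ge_max lexx.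
- rewrite in_region_set1 // in_region_Fmin // state_level_set1 // => /eqP-> z'C.
  have [_ [y yC xy]] := bdryP _ _ xb.
  have yx : H y < H x by apply: lt_le_trans (Hmin_bdry_gt CC yC) (Hmin_le xb).
  apply: (Phi_le_trans (y := y)); first by apply: le_trans (Phi_adj xy) _; rewrite ge_max lexx ltW.
  exact/ltW/lt_le_trans/Hmin_le/xb/(cycle_Phi_lt_exit (wfC CC) yC z'C).
- rewrite in_region_Fmin // in_region_set1 // state_level_Fmin // => zC /eqP->.
  have /FminP [xb Hx] := xs; have [_ [u uC xu]] := bdryP _ _ xb.
  apply: (Phi_le_trans (y := u)); first exact/ltW/(cycle_Phi_lt_exit (wfC CC) zC uC).
  apply: le_trans (Phi_adj (_ : adj u x)) _; first by rewrite adj_sym.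
  by rewrite -Hx ge_max lexx ltW // (cycle_lt_bdry (wfC CC) uC xb).
Qed.

Lemma connect_is_state s s' : connect jump s s' -> is_state s -> is_state s'.
Proof.
case/connectP => p + ->; elim: p s => //= c p IH s /andP[sc pc] _.
by apply: IH pc _; case: (jump_is_state sc).
Qed.

Lemma connect_level_le s s' : connect jump s s' -> state_level s' <= state_level s.
Proof.
case/connectP => p + ->; elim: p s => //= c p IH s /andP[sc pc].
exact: le_trans (IH c pc) (jump_level_le sc).
Qed.

Lemma connect_Phi_le_level s s' z z' : connect jump s s' -> is_state s ->
  in_region s z -> in_region s' z' -> Phi z z' <= state_level s.
Proof.
case/connectP => p + ->; elim: p s z => /= [|c p IH] s z.
  by move=> _; apply: region_Phi_le_level.
case/andP=> sc pc st zs z'l; have [_ stc] := jump_is_state sc.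
have [z1 z1c] := region_nonempty stc.
apply: Phi_le_trans (jump_Phi_le_level sc zs z1c) _.
exact: le_trans (IH c z1 pc stc z1c z'l) (jump_level_le sc).
Qed.

Lemma depth_lt_notin_Cstar C : C \in Ccol -> C \notin Cstar -> depth C < Gam.
Proof. by move=> CC; rewrite CstarP CC ltNge. Qed.

Lemma Fmin_in_Pstar C : C \in Cstar -> Fmin C \in Pstar.
Proof. by move=> CS; apply/PstarP; exists C. Qed.

Lemma region_adj_reach s u w : is_state s -> in_region s u -> adj u w ->
  H w <= state_level s ->
  (forall C, C \in Ccol -> s = Fmin C -> w \notin C -> depth C <= Gam) ->
  exists2 s', connect jump s s' & in_region s' w.
Proof.
move=> st us uw; case: (in_regionP st us) => [[-> uD]|[C [CC -> uC]]] hw hd.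
  rewrite state_level_set1 // in hw.
  have uO : u \in Omega by case/DeltaP: uD.
  have wO : w \in Omega by apply: (Omegabar_adj uO uw); rewrite (le_trans hw) ?H_le_Phibar.
  case: (boolP (w \in Delta)) => wD.
    by exists [set w]; rewrite ?in_region_set1 // connect1 //; apply/jumpP/(JumpDown uD wD).
  have [C CC wC] := notin_Delta wO wD.
  exists (Fmin C); rewrite ?in_region_Fmin // connect1 //; apply/jumpP/(JumpIn CC uD) => //.
  by apply: (bdry_adj wC (Delta_notin CC uD)); rewrite adj_sym.
case: (boolP (w \in C)) => wC; first by exists (Fmin C); rewrite ?in_region_Fmin ?connect0.
have wb : w \in bdry C := bdry_adj uC wC uw.
rewrite state_level_Fmin // in hw.
have ws : w \in bdry_star C by apply/FminP; split => //; apply/eqP; rewrite eq_le hw Hmin_le.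
have wD := bdry_star_Delta CC ws.
exists [set w]; rewrite ?in_region_set1 // connect1 //.
by apply/jumpP/(JumpOut CC wD) => //; apply: hd.
Qed.

Definition reach_region (s : {set T}) : {set T} :=
  [set z | [exists s', connect jump s s' && in_region s' z]].

Lemma reach_regionP s z :
  reflect (exists2 s', connect jump s s' & in_region s' z) (z \in reach_region s).
Proof.
rewrite inE; apply: (iffP existsP) => [[s' /andP[ss' zs']]|[s' ss' zs']].
  by exists s'.
by exists s'; rewrite ss'.
Qed.

Hypothesis Ccol_no_trap : forall U L, ~ shallow_trap Pf Co U L.

(* Otherwise the regions reachable from a state of minimal level form a shallow trap. *)
Lemma reaches_Pstar s : is_state s -> exists2 b, b \in Pstar & connect jump s b.
Proof.
move=> st; apply/exists_inP; apply: contraT => /exists_inPn noP.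
have [s0 ss0 Ls0] :=
  @minOver_attained _ _ (connect jump s) state_level (ex_intro _ s (connect0 _ s)).
set L := minOver _ _ in Ls0.
have s0_level s' : connect jump s0 s' -> state_level s' = L.
  move=> s0s'; apply/eqP; rewrite eq_le Ls0 connect_level_le //= -Ls0.
  exact/minOver_le/(connect_trans ss0 s0s').
have s0_state s' : connect jump s0 s' -> is_state s'.
  by move/connect_is_state; apply; apply: connect_is_state st.
have s0_notP s' : connect jump s0 s' -> s' \notin Pstar.
  move=> s0s'; apply: contraTN (connect_trans ss0 s0s'). exact: noP.
case: (Ccol_no_trap (U := reach_region s0) (L := L)); split.
- have [z zs0] := region_nonempty (s0_state s0 (connect0 _ _)).
  by exists z; apply/reach_regionP; exists s0.
- by move=> z /reach_regionP [s' /s0_state st' zs']; apply: region_sub_Omegabar zs'.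
- move=> z /reach_regionP [s' s0s' zs']; rewrite -(s0_level _ s0s').
  exact: region_le_level (s0_state _ s0s') zs'.
- move=> w /bdryP [wU [u /reach_regionP [s' s0s' us'] wu]]; rewrite ltNge; apply: contra wU => hw.
  have uw : adj u w by rewrite adj_sym.
  have hw' : H w <= state_level s' by rewrite s0_level.
  have [C CC e _|s'' s's'' ws''] := region_adj_reach (s0_state _ s0s') us' uw hw'.
    apply/ltW/depth_lt_notin_Cstar => //; apply: contra (s0_notP _ s0s').
    by rewrite e; apply: Fmin_in_Pstar.
  by apply/reach_regionP; exists s''; rewrite ?(connect_trans s0s').
move=> C CC [z zC /reach_regionP [s' s0s' zs']].
have [[_ zD]|[C' [C'C e zC']]] := in_regionP (s0_state _ s0s') zs'.
  by move: (Delta_notin CC zD); rewrite zC.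
rewrite -(Ccol_disj CC C'C zC zC') in e; split.
- by apply/subsetP => z' z'C; apply/reach_regionP; exists s'; rewrite // e in_region_Fmin.
- apply: depth_lt_notin_Cstar CC _; apply: contra (s0_notP _ s0s').
  by rewrite e => /Fmin_in_Pstar.
- by rewrite -(s0_level _ s0s') e state_level_Fmin.
Qed.

Section ClosedClass.
Variables (r : {set T}) (a : R).
Hypothesis r_rec : recurrent r.
Hypothesis a_le_class : forall C, C \in Cstar -> Fmin C \in comm_class r -> a <= Hmin C.

Lemma comm_class_connect_closed C0 b : C0 \in Cstar -> Fmin C0 \in comm_class r ->
  connect jump (Fmin C0) b -> b \in Pstar -> b \in comm_class r.
Proof.
move=> C0S C0K C0b bP; apply: (comm_class_closed r_rec C0K bP).
by rewrite reachE ?Fmin_in_Pstar.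
Qed.

Lemma class_exit_level_ge C : C \in Cstar -> Fmin C \in comm_class r -> a + Gam <= Hmin (bdry C).
Proof.
move=> CS CK; move: (CS); rewrite CstarP => /andP[_ hd].
by rewrite -(subrK (Hmin C) (Hmin (bdry C))) addrC lerD // a_le_class.
Qed.

Lemma class_reach_level_ge C0 s : C0 \in Cstar -> Fmin C0 \in comm_class r ->
  connect jump (Fmin C0) s -> a + Gam <= state_level s.
Proof.
move=> C0S C0K C0s.
have st : is_state s by apply: connect_is_state C0s _; right; exists C0; rewrite ?Cstar_Ccol.
have [b /PstarP [C CS ->] sb] := reaches_Pstar st.
have CK := comm_class_connect_closed C0S C0K (connect_trans C0s sb) (Fmin_in_Pstar CS).
apply: le_trans (class_exit_level_ge CS CK) _.
by rewrite -(state_level_Fmin (Cstar_Ccol CS)) connect_level_le.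
Qed.

(* Below height [a + Gam] the configurations reachable from a cycle of the class stay in
   regions of states reachable from it, all of which lead back into the class. *)
Lemma class_exit_gt C0 C1 x y : C0 \in Cstar -> Fmin C0 \in comm_class r -> x \in C0 ->
  C1 \in Cstar -> Fmin C1 \notin comm_class r -> y \in C1 -> a + Gam < Phi x y.
Proof.
move=> C0S C0K xC0 C1S C1K yC1; rewrite ltNge; apply/negP => xy_low.
have C0_state : is_state (Fmin C0) by right; exists C0; rewrite ?Cstar_Ccol.
have : y \in reach_region (Fmin C0).
  apply: (Phi_closed xy_low).
    by apply/reach_regionP; exists (Fmin C0); rewrite ?connect0 ?in_region_Fmin ?Cstar_Ccol.
  move=> u w /reach_regionP [s C0s us] uw hw.
  have hw' : H w <= state_level s := le_trans hw (class_reach_level_ge C0S C0K C0s).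
  have [C CC e wC|s' ss' ws'] := region_adj_reach (connect_is_state C0s C0_state) us uw hw'.
    have [CS|/(depth_lt_notin_Cstar CC)/ltW //] := boolP (C \in Cstar).
    have CK : Fmin C \in comm_class r.
      by apply: (comm_class_connect_closed C0S C0K); rewrite ?Fmin_in_Pstar // -e.
    have uC : u \in C by move: us; rewrite e in_region_Fmin.
    rewrite lerBlDr; apply: le_trans (Hmin_le (bdry_adj uC wC uw)) _.
    by apply: le_trans hw _; rewrite addrC lerD2l a_le_class.
  by apply/reach_regionP; exists s'; rewrite ?(connect_trans C0s).
case/reach_regionP => s C0s ys.
have [[_ yD]|[C [CC e yC]]] := in_regionP (connect_is_state C0s C0_state) ys.
  by move: (Delta_notin (Cstar_Ccol C1S) yD); rewrite yC1.
move: C0s; rewrite e (Ccol_disj CC (Cstar_Ccol C1S) yC yC1) => C0C1.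
by move: C1K; rewrite (comm_class_connect_closed C0S C0K C0C1) ?Fmin_in_Pstar.
Qed.

End ClosedClass.

Section NextLevel.
Hypothesis Ccol_hit : plateaux_hit Pf Co.
Hypothesis nu_gt1 : (1 < nu_lvl adj H Pf Co)%N.

Local Notation Pf' := (next_Pfam adj H Pf Co).
Local Notation Co' := (next_Cold adj H Pf Co).
Local Notation Ccol' := (Defs.Ccol adj H Pf' Co').
Local Notation V' := (Vset adj H Pf').
Local Notation Gam' := (Gstar_lvl adj H Pf').
Local Notation exitP' P := (PhiS P (breve Pf' P)).
Local Notation class_union K := (\bigcup_(Q in K) Q).

Lemma class_unionP K z : K \in closed_classes -> z \in class_union K ->
  exists C, [/\ C \in Cstar, Fmin C \in K & z \in Fmin C].
Proof.
move=> /closed_classesP [r rr ->] /bigcupP [b bK zb].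
have /PstarP [C CS eb] : b \in Pstar by move: bK; rewrite comm_classP => /and3P[].
by exists C; rewrite -eb.
Qed.

Lemma class_union_nonempty K : K \in closed_classes -> exists z, z \in class_union K.
Proof.
case/closed_classesP => r rr ->; have [C CS er] := PstarP _ (recurrent_Pstar rr).
have [z0 z0C] := cycle_nonempty (wfC (Cstar_Ccol CS)); have [z zF] := Fmin_nonempty z0C.
by exists z; apply/bigcupP; exists r; rewrite ?comm_class_self // er.
Qed.

Lemma class_union_disjoint K K' z : K \in closed_classes -> K' \in closed_classes ->
  z \in class_union K -> z \in class_union K' -> K = K'.
Proof.
move=> KC K'C /(class_unionP KC) [C [CS CK zC]] /(class_unionP K'C) [C' [C'S C'K zC']].
move: C'K; rewrite -(Ccol_disj (Cstar_Ccol CS) (Cstar_Ccol C'S) (Fmin_sub zC) (Fmin_sub zC')).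
case/closed_classesP: KC CK => r rr ->; case/closed_classesP: K'C => r' rr' -> CK CK'.
exact: comm_class_eq rr rr' CK CK'.
Qed.

Lemma next_PfamP P' : reflect (exists2 K, K \in closed_classes & P' = class_union K) (P' \in Pf').
Proof. exact: (iffP imsetP). Qed.

Lemma next_Pfam_card_gt1 : (1 < #|Pf'|)%N.
Proof.
rewrite card_in_imset // => K K' KC K'C e; have [z zK] := class_union_nonempty KC.
by apply: (class_union_disjoint KC K'C zK); rewrite -e.
Qed.

Lemma next_Pfam_nonempty P' : P' \in Pf' -> exists z, z \in P'.
Proof. by case/next_PfamP => K KC ->; apply: class_union_nonempty. Qed.

Lemma next_Pfam_sub_Omegabar P' z : P' \in Pf' -> z \in P' -> z \in Omega.
Proof.
case/next_PfamP => K KC -> /(class_unionP KC) [C [CS _ /Fmin_sub zC]].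
exact: (cycle_sub_Omegabar (wfC (Cstar_Ccol CS))).
Qed.

Lemma next_breve_cycle K y : K \in closed_classes -> y \in breve Pf' (class_union K) ->
  exists C, [/\ C \in Cstar, Fmin C \notin K & y \in C].
Proof.
move=> KC /breveP [_ /andP[/next_PfamP [K' K'C ->] ne] yK'].
have [C [CS CK' yC]] := class_unionP K'C yK'.
exists C; split; rewrite ?(Fmin_sub yC) //; apply: contra ne => CK.
by rewrite (class_union_disjoint K'C KC yK') //; apply/bigcupP; exists (Fmin C).
Qed.

Lemma next_breve_nonempty (K : {set {set T}}) : exists y, y \in breve Pf' (class_union K).
Proof. exact: breve_nonempty next_Pfam_card_gt1 next_Pfam_nonempty. Qed.

Lemma class_union_exit_gt K : K \in closed_classes ->
  Hmin (class_union K) + Gam < exitP' (class_union K).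
Proof.
move=> KC; have [x0 x0K] := class_union_nonempty KC; have [y0 y0b] := next_breve_nonempty K.
have [x [y [xK yb ->]]] := PhiS_attained x0K y0b.
have [r rr eK] := closed_classesP _ KC.
have [C0 [C0S C0K xC0]] := class_unionP KC xK.
have [C1 [C1S C1K yC1]] := next_breve_cycle KC yb.
rewrite eK in C0K C1K; apply: (class_exit_gt rr _ C0S C0K (Fmin_sub xC0) C1S C1K yC1).
move=> C CS CK; have [z0 z0C] := cycle_nonempty (wfC (Cstar_Ccol CS)).
have [z zF] := Fmin_nonempty z0C; have /FminP [_ <-] := zF.
by apply: Hmin_le; apply/bigcupP; exists (Fmin C); rewrite ?eK.
Qed.

Lemma Gstar_lvl_lt_next : Gam < Gam'.
Proof.
have [P' P'P] : exists P', P' \in Pf'.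
  by have [Q1 [Q2 [Q1P _ _]]] := card_gt1P next_Pfam_card_gt1; exists Q1.
apply: lt_minOver; first by exists P'.
move=> _ /next_PfamP [K KC ->]; rewrite /GammaP -(ltrD2r (Hmin (class_union K))) subrK.
by rewrite addrC class_union_exit_gt.
Qed.

Lemma closed_class_connect K C C' : K \in closed_classes -> Fmin C \in K -> Fmin C' \in K ->
  connect jump (Fmin C) (Fmin C').
Proof.
case/closed_classesP => r rr ->; rewrite !comm_classP => /and3P [CP _ Cr] /and3P [C'P rC' _].
by rewrite -reachE //; apply: connect_trans Cr rC'.
Qed.

Lemma closed_class_same_exit K C C' : K \in closed_classes -> C \in Cstar -> C' \in Cstar ->
  Fmin C \in K -> Fmin C' \in K -> Hmin (bdry C) = Hmin (bdry C').
Proof.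
move=> KC /Cstar_Ccol CC /Cstar_Ccol C'C CK C'K.
rewrite -(state_level_Fmin CC) -(state_level_Fmin C'C); apply/eqP.
by rewrite eq_le !connect_level_le // (closed_class_connect KC).
Qed.

(* A state of a class with two cycles must leave its cycle, which takes depth at most [Gam]. *)
Lemma closed_class_depth_le K C C' : K \in closed_classes -> C \in Cstar -> C' \in Cstar ->
  Fmin C \in K -> Fmin C' \in K -> C != C' -> depth C <= Gam.
Proof.
move=> KC CS C'S CK C'K; apply: contraNle => hd.
have /connectP [[|s p] /= jp e] := closed_class_connect KC CK C'K.
  by rewrite (Fmin_inj (Cstar_Ccol CS) (Cstar_Ccol C'S) (esym e)).
case/andP: jp => /jumpP [x y xD _ e'|D x _ xD e'|D x DC _ e' _ hD _] _.
- by case: (Fmin_neq_set1 (Cstar_Ccol CS) xD e').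
- by case: (Fmin_neq_set1 (Cstar_Ccol CS) xD e').
- by move: hD; rewrite -(Fmin_inj (Cstar_Ccol CS) DC e') leNgt hd.
Qed.

Lemma closed_class_exit_eq K C C' : K \in closed_classes -> C \in Cstar -> C' \in Cstar ->
  Fmin C \in K -> Fmin C' \in K -> C != C' -> Hmin (bdry C) = Hmin (class_union K) + Gam.
Proof.
move=> KC CS C'S CK C'K ne.
have Hmin_class D : D \in Cstar -> Fmin D \in K -> Hmin D = Hmin (bdry C) - Gam.
  move=> DS DK; have hd : depth D = Gam.
    apply/eqP; rewrite eq_le -(andbC (Gam <= _)); move: (DS); rewrite CstarP => /andP[_ ->].
    case: (eqVneq D C) => [->|neD]; first exact: closed_class_depth_le KC CS C'S CK C'K ne.
    exact: closed_class_depth_le KC DS CS DK CK neD.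
  by rewrite -hd /depth (closed_class_same_exit KC CS DS CK DK) opprB addrC subrK.
have [z zK] := class_union_nonempty KC; have [z' z'K ->] := Hmin_attained zK.
have [D [DS DK /FminP [_ ->]]] := class_unionP KC z'K.
by rewrite (Hmin_class D) // subrK.
Qed.

Lemma next_breve_notin_class K C y : K \in closed_classes -> C \in Cstar -> Fmin C \in K ->
  y \in breve Pf' (class_union K) -> y \notin C.
Proof.
move=> KC CS CK /(next_breve_cycle KC) [C1 [C1S C1K yC1]]; apply: contra C1K => yC.
by rewrite -(Ccol_disj (Cstar_Ccol CS) (Cstar_Ccol C1S) yC yC1).
Qed.

Lemma class_exit_le_next_exit K C : K \in closed_classes -> C \in Cstar -> Fmin C \in K ->
  Hmin (bdry C) <= exitP' (class_union K).
Proof.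
move=> KC CS CK; have [x0 x0K] := class_union_nonempty KC; have [y0 y0b] := next_breve_nonempty K.
have [x [y [xK yb ->]]] := PhiS_attained x0K y0b.
have [C' [C'S C'K xC']] := class_unionP KC xK.
have [w wb hw] := bdry_le_Phi (Fmin_sub xC') (next_breve_notin_class KC C'S C'K yb).
by rewrite (closed_class_same_exit KC CS C'S CK C'K); apply: le_trans hw; apply: Hmin_le.
Qed.

Lemma class_union_Phi_lt_exit K p p' : K \in closed_classes ->
  p \in class_union K -> p' \in class_union K -> Phi p p' < exitP' (class_union K).
Proof.
move=> KC pK p'K.
have [C [CS CK pC]] := class_unionP KC pK; have [C' [C'S C'K p'C]] := class_unionP KC p'K.
have CC := Cstar_Ccol CS; have C'C := Cstar_Ccol C'S.
case: (eqVneq C C') p'C => [<-|ne] p'C.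
  apply: lt_le_trans (class_exit_le_next_exit KC CS CK).
  exact: (cycle_Phi_lt_exit (wfC CC) (Fmin_sub pC) (Fmin_sub p'C)).
have st : is_state (Fmin C) by right; exists C.
have rp : in_region (Fmin C) p by rewrite in_region_Fmin // (Fmin_sub pC).
have rp' : in_region (Fmin C') p' by rewrite in_region_Fmin // (Fmin_sub p'C).
apply: le_lt_trans (connect_Phi_le_level (closed_class_connect KC CK C'K) st rp rp') _.
rewrite state_level_Fmin // (closed_class_exit_eq KC CS C'S CK C'K ne).
exact: class_union_exit_gt.
Qed.

Lemma next_plateaux_wf : wf_plateaux Pf'.
Proof.
split; [exact: next_Pfam_nonempty|exact: next_Pfam_sub_Omegabar|exact: next_Pfam_card_gt1|].
by move=> _ p p' /next_PfamP [K KC ->]; apply: class_union_Phi_lt_exit.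
Qed.

Lemma next_Cold_sub C : C \in Co' -> C \in Ccol.
Proof. by case/setUP; rewrite inE => /andP[] // /Cstar_Ccol. Qed.

Lemma next_Ccol_wf : wf_collection Ccol'.
Proof.
apply: (Ccol_wf_collection next_plateaux_wf); split.
  by move=> C /next_Cold_sub; apply: wfC.
by move=> C C' z /next_Cold_sub CC /next_Cold_sub C'C; apply: Ccol_disj.
Qed.

(* A cycle meeting a next-level V-set lies inside it: leaving it costs more than its own
   exit height, which would then undercut the exit height of the next-level plateau. *)
Lemma Ccol_sub_next_Vset C P' z : C \in Ccol -> P' \in Pf' -> z \in C -> z \in V' P' ->
  C \subset V' P'.
Proof.
move=> CC P'P zC zV; apply/subsetP => v vC; apply: contraT => vV.
have [w wb hw] := bdry_le_Phi zV vV.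
have exit_lt : exitP' P' < Hmin (bdry C).
  apply: le_lt_trans (exitP_le_Vset_bdry next_plateaux_wf P'P wb) _.
  exact: le_lt_trans hw (cycle_Phi_lt_exit (wfC CC) zC vC).
have [p pP pz] := VsetP_witness next_plateaux_wf P'P zV.
have pC : p \in C.
  apply: contraT => pC; have [w' w'b hw'] := bdry_le_Phi zC pC.
  rewrite Phi_sym in hw'; have := le_lt_trans (Hmin_le w'b) (le_lt_trans hw' pz).
  by rewrite ltNge ltW.
case/next_PfamP: P'P pP exit_lt => K KC -> pK.
have [D [DS DK pD]] := class_unionP KC pK.
rewrite -(Ccol_disj (Cstar_Ccol DS) CC (Fmin_sub pD) pC) ltNge.
by rewrite class_exit_le_next_exit.
Qed.

(* Either [C] meets a next-level V-set, or it is deep and recurrent, hence part of a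
   next-level plateau. *)
Lemma dropped_cycle_sub_next_Vset C : C \in Ccol -> C \notin Ccol' ->
  exists2 P', P' \in Pf' & C \subset V' P'.
Proof.
move=> CC CC'; case: (boolP (C \in Co')) => CCo.
  have : ~~ [forall P' in Pf', [disjoint C & V' P']].
    by apply: contra CC' => /forall_inP h; apply/(CcolP _ _ C); right.
  rewrite negb_forall_in => /exists_inP [P' P'P]; rewrite -setI_eq0 => /set0Pn [z /setIP [zC zV]].
  by exists P' => //; apply: Ccol_sub_next_Vset zC zV.
have CS : C \in Cstar.
  rewrite CstarP CC leNgt; apply: contra CCo => hd.
  by apply/setUP; right; rewrite inE CC.
have rr : recurrent (Fmin C).
  move: CCo; rewrite in_setU negb_or => /andP[+ _].
  by rewrite /Cstar_tr in_set CS /= /transient in_set Fmin_in_Pstar //= negbK.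
have KC : comm_class (Fmin C) \in closed_classes by apply/closed_classesP; exists (Fmin C).
exists (class_union (comm_class (Fmin C))); first by apply/next_PfamP; exists (comm_class (Fmin C)).
have [z0 z0C] := cycle_nonempty (wfC CC); have [z zF] := Fmin_nonempty z0C.
apply: (Ccol_sub_next_Vset CC _ (Fmin_sub zF)).
  by apply/next_PfamP; exists (comm_class (Fmin C)).
apply: (plateau_sub_Vset next_plateaux_wf); first by apply/next_PfamP; exists (comm_class (Fmin C)).
by apply/bigcupP; exists (Fmin C); rewrite ?comm_class_self.
Qed.

Lemma next_plateaux_hit : plateaux_hit Pf' Co'.
Proof.
move=> P PO Pst; have [C CC [z zP zC]] := Ccol_hit PO Pst.
have [CC'|/(dropped_cycle_sub_next_Vset CC) [P' P'P /subsetP CV]] := boolP (C \in Ccol').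
  by exists C => //; exists z.
by exists (V' P'); [apply/CcolP; left; exists P'|exists z; rewrite ?CV].
Qed.

Section NextTrap.
Variables (U : {set T}) (L : R) (z0 : T).
Hypothesis z0U : z0 \in U.
Hypothesis U_sub : {subset U <= Omega}.
Hypothesis U_le : forall z, z \in U -> H z <= L.
Hypothesis U_bdry : forall w, w \in bdry U -> L < H w.
Hypothesis U_cycles : forall C, C \in Ccol' -> (exists2 z, z \in C & z \in U) ->
  [/\ C \subset U, depth C < Gam' & Hmin (bdry C) <= L].

Lemma trap_disjoint_next_Vset P' z : P' \in Pf' -> z \in V' P' -> z \notin U.
Proof.
move=> P'P zV; apply/negP => zU.
have VC : V' P' \in Ccol' by apply/CcolP; left; exists P'.
have [_ + _] := U_cycles VC (ex_intro2 _ _ z zV zU).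
by rewrite ltNge (Gstar_le_depth_Vset next_plateaux_wf P'P).
Qed.

Definition trap_component (z : T) : {set T} :=
  [set v | connect [rel a b | adj a b && (b \in U)] z v].

Lemma trap_component_path z v : z \in U -> v \in trap_component z ->
  exists p, [/\ path adj z p, last z p = v & all (mem U) (z :: p)].
Proof.
move=> zU; rewrite inE => /connectP [p pp ->]; exists p; split.
- by apply: sub_path pp => a b /andP[].
- by [].
- by elim: p z zU pp => [|c p IH] z zU /=; rewrite ?zU // => /andP[/andP[_ cU] /(IH c cU)].
Qed.

Lemma trap_component_sub z : z \in U -> trap_component z \subset U.
Proof.
move=> zU; apply/subsetP => v /(trap_component_path zU) [p [_ <- /allP pU]].
exact: pU (mem_last z p).
Qed.

Lemma trap_component_Phi_le z v : z \in U -> v \in trap_component z -> Phi z v <= L.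
Proof.
move=> zU /(trap_component_path zU) [p [pp lp /allP pU]].
by apply/Phi_leP; exists p; split => // y /pU; apply: U_le.
Qed.

Lemma trap_component_bdry z w : z \in U -> w \in bdry (trap_component z) -> L < H w.
Proof.
move=> zU /bdryP [wQ [y yQ wy]]; have yU := subsetP (trap_component_sub zU) y yQ.
apply: U_bdry; apply: (bdry_adj yU) _ _; last by rewrite adj_sym.
apply: contra wQ => wU; move: yQ; rewrite !inE => /connect_trans; apply.
by apply: connect1; rewrite /= adj_sym wy.
Qed.

(* Otherwise the component of [z] in [U] would be a basin inside [C], whose stable plateau
   is hit by a cycle of the next level which can only be [C] itself. *)
Lemma trap_cycle_sub C z : C \in Ccol -> z \in C -> z \in U -> C \subset U.
Proof.
move=> CC zC zU; apply/subsetP => v vC; apply: contraT => vU.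
have [w wb hw] := bdry_le_Phi zU vU.
have L_lt : L < Hmin (bdry C).
  exact: lt_trans (lt_le_trans (U_bdry wb) hw) (cycle_Phi_lt_exit (wfC CC) zC vC).
have QC : trap_component z \subset C.
  apply/subsetP => y yQ; apply: contraT => yC; have [w' w'b hw'] := bdry_le_Phi zC yC.
  have := le_trans (Hmin_le w'b) (le_trans hw' (trap_component_Phi_le zU yQ)).
  by rewrite leNgt L_lt.
have zQ : z \in trap_component z by rewrite inE connect0.
have [Pi PiQ Pist] := basin_contains_stable_plateau zQ
  (fun y yQ => U_le (subsetP (trap_component_sub zU) y yQ)) (fun w => @trap_component_bdry z w zU).
have PiU := subset_trans PiQ (trap_component_sub zU).
have PiO : Pi \subset Omega by apply/subsetP => y /(subsetP PiU) /U_sub.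
have [C' C'C [z' z'Pi z'C']] := next_plateaux_hit PiO Pist.
case/CcolP: C'C z'C' => [[P' P'P ->] z'V|[C'o _] z'C'].
  by move: (trap_disjoint_next_Vset P'P z'V); rewrite (subsetP PiU).
have z'C := subsetP QC z' (subsetP PiQ z' z'Pi).
have eC := Ccol_disj (next_Cold_sub C'o) CC z'C' z'C; subst C'.
have CC' : C \in Ccol'.
  apply/CcolP; right; split=> // P' P'P; apply/pred0P => y /=; apply/negP => /andP[yC yV].
  have /subsetP CV := Ccol_sub_next_Vset CC P'P yC yV.
  by move: (trap_disjoint_next_Vset P'P (CV z' z'C')); rewrite (subsetP PiU).
have [/subsetP CU _ _] := U_cycles CC' (ex_intro2 _ _ z' z'C' (subsetP PiU z' z'Pi)).
by rewrite CU in vU.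
Qed.

Lemma trap_cycle_kept C : C \in Ccol -> C \subset U ->
  [/\ C \in Ccol', C \in Co' & Hmin (bdry C) <= L].
Proof.
move=> CC /subsetP CU; have [z zC] := cycle_nonempty (wfC CC).
have CC' : C \in Ccol'.
  apply: contraT => /(dropped_cycle_sub_next_Vset CC) [P' P'P /subsetP CV].
  by move: (trap_disjoint_next_Vset P'P (CV z zC)); rewrite CU.
have [_ _ hL] := U_cycles CC' (ex_intro2 _ _ z zC (CU z zC)).
case/CcolP: (CC') => [[P' P'P eC]|[CCo _]]; last by split.
have zV : z \in V' P' by rewrite -eC.
by move: (trap_disjoint_next_Vset P'P zV); rewrite CU.
Qed.

Definition state_in_trap (s : {set T}) : Prop :=
  is_state s /\ forall z, in_region s z -> z \in U.

Lemma jump_state_in_trap s s' : state_in_trap s -> jump s s' -> state_in_trap s'.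
Proof.
move=> [_ sU] ss'; split; first by case: (jump_is_state ss').
move: sU; case/jumpP: ss' => [x y xD yD -> -> xy yx|C x CC xD -> -> xb|C x CC xD -> -> _ xs] sU.
- have xU : x \in U by apply: sU; rewrite in_region_set1.
  move=> z; rewrite in_region_set1 // => /eqP->; apply: contraT => yU.
  by have := U_bdry (bdry_adj xU yU xy); rewrite ltNge (le_trans yx) ?U_le.
- have xU : x \in U by apply: sU; rewrite in_region_set1.
  have [_ [y yC xy]] := bdryP _ _ xb.
  have yU : y \in U.
    apply: contraT => yU; have := U_bdry (bdry_adj xU yU xy); rewrite ltNge.
    by rewrite (le_trans (ltW (Hmin_bdry_gt CC yC))) // (le_trans (Hmin_le xb)) ?U_le.
  by move=> z; rewrite in_region_Fmin // => /(subsetP (trap_cycle_sub CC yC yU)).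
- have CU : C \subset U by apply/subsetP => z zC; apply: sU; rewrite in_region_Fmin.
  have [_ _ hL] := trap_cycle_kept CC CU.
  have /FminP [xb Hx] := xs; have [_ [u uC xu]] := bdryP _ _ xb.
  move=> z; rewrite in_region_set1 // => /eqP->; apply: contraT => xU.
  have := U_bdry (bdry_adj (subsetP CU u uC) xU (_ : adj u x)).
  by rewrite adj_sym Hx ltNge hL => /(_ xu).
Qed.

Lemma connect_state_in_trap s s' : state_in_trap s -> connect jump s s' -> state_in_trap s'.
Proof.
move=> + /connectP [p + ->]; elim: p s => //= c p IH s sU /andP[sc pc].
exact: IH (jump_state_in_trap sU sc) pc.
Qed.

(* The trap would have to contain a deep recurrent cycle, which is kept at the next level
   neither as a transient deep cycle nor as a shallow one. *)
Lemma trap_absurd : False.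
Proof.
have [s0 s0U] : exists s0, state_in_trap s0.
  have [z0D|/(notin_Delta (U_sub z0U)) [C CC z0C]] := boolP (z0 \in Delta).
    exists [set z0]; split; first by left; exists z0.
    by move=> z; rewrite in_region_set1 // => /eqP->.
  exists (Fmin C); split; first by right; exists C.
  by move=> z; rewrite in_region_Fmin // => /(subsetP (trap_cycle_sub CC z0C z0U)).
have [b bP s0b] := reaches_Pstar s0U.1.
have [r rr br] := exists_recurrent_reach bP.
have [C CS er] := PstarP _ (recurrent_Pstar rr).
have [_ rU] : state_in_trap r.
  apply: (connect_state_in_trap s0U); apply: connect_trans s0b _.
  by rewrite -reachE // recurrent_Pstar.
have CU : C \subset U by apply/subsetP => z zC; apply: rU; rewrite er in_region_Fmin ?Cstar_Ccol.
have [_ + _] := trap_cycle_kept (Cstar_Ccol CS) CU.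
case/setUP; rewrite inE => /andP[_]; first by rewrite inE -er rr andbF.
by move: CS; rewrite CstarP => /andP[_ /le_lt_trans h] /h; rewrite ltxx.
Qed.

End NextTrap.

Lemma next_level_inv : level_inv Pf' Co'.
Proof.
split; [exact: next_plateaux_wf|exact: next_Ccol_wf|exact: next_plateaux_hit|].
by move=> U L [[z0 z0U] U_sub U_le U_bdry U_cycles]; apply: (trap_absurd z0U U_sub U_le U_bdry).
Qed.

End NextLevel.
End Level.

Lemma level_step Pf Co : level_inv Pf Co -> (1 < nu_lvl adj H Pf Co)%N ->
  Gstar_lvl adj H Pf < Gstar_lvl adj H (next_Pfam adj H Pf Co) /\
  level_inv (next_Pfam adj H Pf Co) (next_Cold adj H Pf Co).
Proof.
case=> _ Ccol_wf Ccol_hit Ccol_no_trap nu_gt1.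
by split; [apply: Gstar_lvl_lt_next|apply: next_level_inv].
Qed.

Local Notation Pfam1 := (Pfam1 adj H).

Lemma Pfam1P (P : {set T}) : reflect (P \subset Omega /\ stable_plateau adj H P) (P \in Pfam1).
Proof. by rewrite inE; apply: (iffP andP) => -[PO /asboolP Pst]. Qed.

Lemma stable_plateau_Phi_le (P : {set T}) p p' : stable_plateau adj H P -> p \in P -> p' \in P ->
  Phi p p' <= H p.
Proof.
case=> _ Pconn HP _ pP p'P; have [q [[qp ql] /allP qP]] := Pconn p p' pP p'P.
apply/Phi_leP; exists q; split => // z; rewrite inE => /predU1P [->//|zq].
by rewrite (HP z p) //; apply: qP.
Qed.

Lemma Pfam1_wf_plateaux : (1 < #|Pfam1|)%N -> wf_plateaux Pfam1.
Proof.
move=> card_gt1.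
have Pne P : P \in Pfam1 -> exists z, z \in P by case/Pfam1P => _ [/set0Pn].
split => // [P z /Pfam1P [/subsetP PO _] /PO //|P p p' PP pP p'P].
have [_ [_ _ HP bP]] := Pfam1P _ PP.
have [y yb] := breve_nonempty P card_gt1 Pne.
have [a [b [aP bb ->]]] := PhiS_attained pP yb.
have bP' : b \notin P.
  apply/negP => bP'; case/breveP: bb => Q /andP[QP QnP] bQ.
  have [_ Qst] := Pfam1P _ QP.
  by move: QnP; rewrite (stable_plateau_eq Qst (proj2 (Pfam1P _ PP)) bQ bP') eqxx.
have [w wb hw] := bdry_le_Phi aP bP'.
apply: le_lt_trans (stable_plateau_Phi_le (proj2 (Pfam1P _ PP)) pP p'P) _.
by apply: lt_le_trans hw; rewrite (HP p a) // bP.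
Qed.

Lemma Pfam1_hit : (1 < #|Pfam1|)%N -> plateaux_hit Pfam1 set0.
Proof.
move=> card_gt1 P PO Pst; have PP : P \in Pfam1 by apply/Pfam1P.
exists (Vset adj H Pfam1 P); first by apply/CcolP; left; exists P.
have [z zP] := plateau_nonempty (Pfam1_wf_plateaux card_gt1) PP.
by exists z; rewrite // (plateau_sub_Vset (Pfam1_wf_plateaux card_gt1)).
Qed.

(* A trap contains a stable plateau, which meets the V-set of a plateau, and these are deep. *)
Lemma Pfam1_no_trap U L : (1 < #|Pfam1|)%N -> ~ shallow_trap Pfam1 set0 U L.
Proof.
move=> card_gt1 [[z zU] U_sub U_le U_bdry U_cycles].
have [Pi PiU Pist] := basin_contains_stable_plateau zU U_le U_bdry.
have PiO : Pi \subset Omega by apply/subsetP => y /(subsetP PiU) /U_sub.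
have [C CC [z' z'Pi z'C]] := Pfam1_hit card_gt1 PiO Pist.
have [_ hd _] := U_cycles C CC (ex_intro2 _ _ z' z'C (subsetP PiU z' z'Pi)).
case/CcolP: CC => [[P PP eC]|[]]; last by rewrite inE.
move: hd; rewrite eC ltNge.
by rewrite (Gstar_le_depth_Vset (Pfam1_wf_plateaux card_gt1) PP).
Qed.

Lemma level_inv_Pfam1 : (1 < #|Pfam1|)%N -> level_inv Pfam1 set0.
Proof.
move=> card_gt1; split; [exact: Pfam1_wf_plateaux| |exact: Pfam1_hit|].
  by apply: (Ccol_wf_collection (Pfam1_wf_plateaux card_gt1)); split=> C; rewrite inE.
by move=> U L; apply: Pfam1_no_trap.
Qed.

Lemma level_inv_level k : (forall j, (j <= k)%N -> (2 <= nu adj H j)%N) ->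
  level_inv (level adj H k.+1).1 (level adj H k.+1).2.
Proof.
elim: k => [|k IH] nu_ge2; first exact: level_inv_Pfam1 (nu_ge2 0%N isT).
have inv := IH (fun j jk => nu_ge2 j (leqW jk)).
by have [_] := level_step inv (nu_ge2 k.+1 (leqnn _)).
Qed.

Lemma Gamma_star_increasing h : (2 <= h)%N -> level_defined adj H h ->
  Gamma_star adj H h.-1 < Gamma_star adj H h.
Proof.
case: h => [|[|k]] // _ defined.
have inv := level_inv_level (fun j jk => defined j (leq_trans jk (leqnSn _))).
by have [] := level_step inv (defined k.+1 (leqnn _)).
Qed.

End CommunicationHeight.

Theorem mainTheorem3 (R : realType) (T : finType) (adj : rel T) (H : T -> R) :
  symmetric adj -> irreflexive adj ->
  (forall x y : T, connect adj x y) ->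
  forall h : nat, (2 <= h)%N -> level_defined adj H h ->
  Gamma_star adj H h.-1 < Gamma_star adj H h.
Proof. by move=> adj_sym _ adj_connected; apply: Gamma_star_increasing. Qed.
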